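(* Let $\mathscr T$ be a leafless, locally finite rooted directed tree of finite branching index, $q\geqslant1$ real, $S_{\lambda,q}$ the Dirichlet shift on $\mathscr T$, and $S_{w,q}$ the classical Dirichlet shift. Then $S_{\lambda,q}$ is unitarily equivalent to some finite orthogonal direct sum of copies of $S_{w,q}$ if and only if either $q=1$ or $\mathscr T$ is isomorphic to $\mathbb N$.
   Context: A directed tree $\mathscr T=(V,\mathcal E)$ is a directed graph with no circuits, connected, in which every non-root vertex has a unique parent; rooted means a unique vertex $\mathsf{root}$ has no parent. $\mathsf{Chi}(v)=\{u:(v,u)\in\mathcal E\}$; $\mathsf{Chi}^{\langle n\rangle}$ is the $n$-fold iterate. Locally finite: each $\mathsf{Chi}(v)$ finite; leafless: each $\mathsf{Chi}(v)$ nonempty; $V$ countably infinite. Depth $n_v$: the unique $n$ with $v\in\mathsf{Chi}^{\langle n\rangle}(\mathsf{root})$. Branching vertices $V_\prec=\{v:\mathrm{card}(\mathsf{Chi}(v))\geqslant2\}$; branching index $k_{\mathscr T}=1+\sup\{n_w:w\in V_\prec\}$ if $V_\prec\ne\emptyset$, else $0$; finite branching index means $k_{\mathscr T}<\infty$. $\mathscr T$ is isomorphic to $\mathbb N$ if there is an edge-preserving bijection onto the tree with vertices $\mathbb N$ and edges $(n,n+1)$ (equivalently $V_\prec=\emptyset$). The weighted shift on $\ell^2(V)$ with weights $\{\lambda_u\}$ is $S_\lambda e_v=\sum_{u\in\mathsf{Chi}(v)}\lambda_ue_u$. The Dirichlet shift $S_{\lambda,q}$ has weights $\lambda_{u,q}=\frac{1}{\sqrt{\mathrm{card}(\mathsf{Chi}(v))}}\sqrt{\frac{n_v+q}{n_v+1}}$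 for $u\in\mathsf{Chi}(v)$. The classical Dirichlet shift $S_{w,q}$ is the operator on $\ell^2(\mathbb N)$ given by $S_{w,q}e_n=\sqrt{\frac{n+q}{n+1}}\,e_{n+1}$. *)

From Stdlib Require Import Reals List Relations ClassicalEpsilon.
Open Scope R_scope.
Set Implicit Arguments.

Definition C : Type := (R * R)%type.
Definition C0 : C := (0, 0).
Definition RtoC (r : R) : C := (r, 0).
Definition Cadd (a b : C) : C := (fst a + fst b, snd a + snd b).
Definition Cmul (a b : C) : C :=
  (fst a * fst b - snd a * snd b, fst a * snd b + snd a * fst b).
Definition Cnorm2 (a : C) : R := fst a * fst a + snd a * snd a.

Definition sqsum {X : Type} (f : X -> C) (l : list X) : R :=
  fold_right (fun x acc => Cnorm2 (f x) + acc) 0 l.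

Definition in_l2 {X : Type} (f : X -> C) : Prop :=
  exists M : R, forall l : list X, NoDup l -> sqsum f l <= M.

Definition l2_sqnorm {X : Type} (f : X -> C) (s : R) : Prop :=
  is_lub (fun x => exists l : list X, NoDup l /\ x = sqsum f l) s.

(* U : l^2(X) -> l^2(Y) is unitary: maps l^2 into l^2, C-linear,
   norm preserving (hence inner-product preserving), and onto. *)
Definition is_unitary {X Y : Type} (U : (X -> C) -> (Y -> C)) : Prop :=
  (forall f, in_l2 f -> in_l2 (U f)) /\
  (forall (a : C) (f g : X -> C), in_l2 f -> in_l2 g ->
     forall y, U (fun x => Cadd (Cmul a (f x)) (g x)) y
               = Cadd (Cmul a (U f y)) (U g y)) /\
  (forall f s, in_l2 f -> l2_sqnorm f s -> l2_sqnorm (U f) s) /\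
  (forall g : Y -> C, in_l2 g -> exists f, in_l2 f /\ forall y, U f y = g y).

Definition unitarily_equivalent {X Y : Type}
  (A : (X -> C) -> (X -> C)) (B : (Y -> C) -> (Y -> C)) : Prop :=
  exists U : (X -> C) -> (Y -> C),
    is_unitary U /\ forall f, in_l2 f -> forall y, U (A f) y = B (U f) y.

(* E v u means (v,u) is an edge, i.e. u is a child of v. *)
Definition rooted_directed_tree {V : Type} (E : V -> V -> Prop) (root : V) : Prop :=
  (forall v, ~ clos_trans V E v v) /\
  (forall u v, clos_refl_sym_trans V E u v) /\
  (forall v, ~ E v root) /\
  (forall u, u <> root -> exists! v, E v u).

Definition locally_finite {V : Type} (E : V -> V -> Prop) : Prop :=
  forall v, exists l : list V, forall u, E v u <-> In u l.

Definition leafless {V : Type} (E : V -> V -> Prop) : Prop :=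
  forall v, exists u, E v u.

Definition countably_infinite (V : Type) : Prop :=
  exists e : nat -> V, (forall m n, e m = e n -> m = n) /\ (forall v, exists n, e n = v).

Definition chi_card {V : Type} (E : V -> V -> Prop) (v : V) (k : nat) : Prop :=
  exists l : list V, NoDup l /\ (forall u, E v u <-> In u l) /\ length l = k.

Inductive depth {V : Type} (E : V -> V -> Prop) (root : V) : V -> nat -> Prop :=
  | depth_root : depth E root root 0
  | depth_step : forall v u n, depth E root v n -> E v u -> depth E root u (S n).

Definition branching {V : Type} (E : V -> V -> Prop) (v : V) : Prop :=
  exists k, chi_card E v k /\ (2 <= k)%nat.

Definition finite_branching_index {V : Type} (E : V -> V -> Prop) (root : V) : Prop :=
  exists N : nat, forall v n, branching E v -> depth E root v n -> (n <= N)%nat.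

Definition iso_to_nat {V : Type} (E : V -> V -> Prop) : Prop :=
  exists phi : V -> nat,
    (forall u v, phi u = phi v -> u = v) /\ (forall n, exists v, phi v = n) /\
    (forall u v, E u v <-> phi v = S (phi u)).

Definition parent {V : Type} (E : V -> V -> Prop) (u : V) : option V :=
  match excluded_middle_informative (exists v, E v u) with
  | left H => Some (proj1_sig (constructive_indefinite_description _ H))
  | right _ => None
  end.

(* S_lambda e_v = sum_{u in Chi v} lambda_u e_u, i.e. (S f)(u) = lambda_u f(parent u) *)
Definition weighted_shift {V : Type} (E : V -> V -> Prop) (lam : V -> R)
  (f : V -> C) (u : V) : C :=
  match parent E u with
  | Some v => Cmul (RtoC (lam u)) (f v)
  | None => C0
  end.

Definition dirichlet_weights {V : Type} (E : V -> V -> Prop) (root : V) (q : R)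
  (lam : V -> R) : Prop :=
  forall v u n k, E v u -> depth E root v n -> chi_card E v k ->
    lam u = / sqrt (INR k) * sqrt ((INR n + q) / (INR n + 1)).

Definition classical_dirichlet (q : R) (g : nat -> C) (n : nat) : C :=
  match n with
  | O => C0
  | S k => Cmul (RtoC (sqrt ((INR k + q) / (INR k + 1)))) (g k)
  end.

(* orthogonal direct sum of m copies of A on l^2(N), realised on
   l^2({0..m-1} x N) = (+)_{i<m} l^2(N), acting componentwise *)
Definition direct_sum (m : nat) (A : (nat -> C) -> (nat -> C))
  (g : ({i : nat | (i < m)%nat} * nat)%type -> C)
  (p : ({i : nat | (i < m)%nat} * nat)%type) : C :=
  A (fun k => g (fst p, k)) (snd p).
Arguments direct_sum m A g p : clear implicits.

(* For [q >= 1] the Dirichlet weights satisfy [sum_(u in Chi v) lambda_u^2 = w(n_v)] with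
   [w(n) = (n + q) / (n + 1)], so [||S f||^2 = sum_v w(n_v) |f v|^2]; the same identity holds in
   the model [m] copies of [l^2(N)], with [n] the height.  Since [w <= w(0) = q], and [w] is strictly
   decreasing when [q > 1], a vector stretched by exactly [sqrt q] must live at the bottom.

   If [q > 1] and [U] intertwines the shifts, the preimages of the [e_(i,0)] are therefore multiples of
   [e_root], so [m = 1].  By induction on depth, [U e_v] is then a unimodular multiple of [e_(n_v)]:
   orthogonality to the images of shallower vertices kills its lower coordinates and the decreasing
   weights kill the higher ones.  Two vertices of equal depth would have parallel images, so the
   depth is a bijection onto [N] along which edges go from [n] to [n + 1].

   Conversely, on a tree isomorphic to [N] the depth identifies [S_lambda] with [S_w].  If [q = 1],
   [S_lambda] is an isometry whose wandering subspace is spanned by [e_root] and, for each branching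
   vertex [v], by the rows [j >= 1] of a Helmert matrix placed on [Chi v].  Finite branching index makes
   these finitely many, and their shifted images form an orthonormal basis of every level (the missing
   constant Helmert row on [Chi v] is the shifted image of [e_v]), which gives the unitary onto copies
   of the unilateral shift.  All operators involved preserve depth, so every unitary is assembled
   level by level from finite orthogonal matrices. *)

From Stdlib Require Import Reals List Relations Lra Lia Arith Permutation FinFun.
From Stdlib Require Import ClassicalEpsilon FunctionalExtensionality ProofIrrelevance.
(* Imported after [Reals] so that [C] denotes the complex scalars, not binomial coefficients. *)
Open Scope R_scope.

Definition dec (P : Prop) : {P} + {~ P} := excluded_middle_informative P.

Definition eq_dec {X : Type} (x y : X) : {x = y} + {x <> y} := dec (x = y).

Definition delta {X : Type} (x y : X) : R := if dec (x = y) then 1 else 0.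

Lemma delta_refl {X} (x : X) : delta x x = 1.
Proof. unfold delta; destruct (dec (x = x)); congruence. Qed.

Lemma delta_neq {X} (x y : X) : x <> y -> delta x y = 0.
Proof. unfold delta; destruct (dec (x = y)); congruence. Qed.

Definition rsum {X : Type} (F : X -> R) (l : list X) : R :=
  fold_right (fun x acc => F x + acc) 0 l.

Section ListSums.
Context {X : Type}.
Implicit Types (F G : X -> R) (l : list X).

Lemma rsum_cons F a l : rsum F (a :: l) = F a + rsum F l.
Proof. reflexivity. Qed.

Lemma rsum_app F l1 l2 : rsum F (l1 ++ l2) = rsum F l1 + rsum F l2.
Proof. induction l1 as [|a l1 IH]; simpl; [lra|]. unfold rsum in *; simpl; rewrite IH; lra. Qed.

Lemma rsum_plus F G l : rsum (fun x => F x + G x) l = rsum F l + rsum G l.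
Proof. induction l as [|a l IH]; unfold rsum in *; simpl; [lra|]. rewrite IH; lra. Qed.

Lemma rsum_minus F G l : rsum (fun x => F x - G x) l = rsum F l - rsum G l.
Proof. induction l as [|a l IH]; unfold rsum in *; simpl; [lra|]. rewrite IH; lra. Qed.

Lemma rsum_scal_l c F l : rsum (fun x => c * F x) l = c * rsum F l.
Proof. induction l as [|a l IH]; unfold rsum in *; simpl; [lra|]. rewrite IH; lra. Qed.

Lemma rsum_scal_r c F l : rsum (fun x => F x * c) l = rsum F l * c.
Proof. induction l as [|a l IH]; unfold rsum in *; simpl; [lra|]. rewrite IH; lra. Qed.

Lemma rsum_ext_in F G l : (forall x, In x l -> F x = G x) -> rsum F l = rsum G l.
Proof.
  induction l as [|a l IH]; intros H; unfold rsum in *; simpl in *; auto.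
  rewrite H, IH by auto. reflexivity.
Qed.

Lemma rsum_ext F G l : (forall x, F x = G x) -> rsum F l = rsum G l.
Proof. intros; apply rsum_ext_in; auto. Qed.

Lemma rsum_const c l : rsum (fun _ => c) l = INR (length l) * c.
Proof.
  induction l as [|a l IH]; [unfold rsum; simpl; lra|].
  rewrite rsum_cons, IH, length_cons, S_INR; lra.
Qed.

Lemma rsum_zero F l : (forall x, In x l -> F x = 0) -> rsum F l = 0.
Proof. intros H. rewrite (rsum_ext_in _ (fun _ => 0)), rsum_const by auto. lra. Qed.

Lemma rsum_nonneg F l : (forall x, In x l -> 0 <= F x) -> 0 <= rsum F l.
Proof.
  induction l as [|a l IH]; intros H; unfold rsum in *; simpl in *; [lra|].
  assert (0 <= F a) by auto. specialize (IH (fun x Hx => H x (or_intror Hx))). lra.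
Qed.

Lemma rsum_perm F l1 l2 : Permutation l1 l2 -> rsum F l1 = rsum F l2.
Proof. induction 1; unfold rsum in *; simpl in *; lra. Qed.

Lemma rsum_same F l1 l2 :
  NoDup l1 -> NoDup l2 -> (forall x, In x l1 <-> In x l2) -> rsum F l1 = rsum F l2.
Proof. intros; apply rsum_perm, NoDup_Permutation; auto. Qed.

Lemma rsum_filter F (P : X -> bool) l :
  rsum F (filter P l) = rsum (fun x => if P x then F x else 0) l.
Proof.
  induction l as [|a l IH]; [reflexivity|]. simpl.
  destruct (P a); rewrite ?rsum_cons, IH; ring.
Qed.

Lemma rsum_filter_split F (P : X -> bool) l :
  rsum F l = rsum F (filter P l) + rsum F (filter (fun x => negb (P x)) l).
Proof.
  rewrite !rsum_filter, <- rsum_plus. apply rsum_ext. intros x. destruct (P x); simpl; ring.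
Qed.

Definition in_listb l1 (x : X) : bool := if in_dec eq_dec x l1 then true else false.

Lemma rsum_filter_incl F l1 l2 :
  NoDup l1 -> NoDup l2 -> incl l1 l2 -> rsum F (filter (in_listb l1) l2) = rsum F l1.
Proof.
  intros H1 H2 Hi. apply rsum_same; auto using NoDup_filter.
  intros x. rewrite filter_In. unfold in_listb. destruct (in_dec eq_dec x l1).
  - split; [tauto | auto].
  - split; [intros [_ H]; discriminate | tauto].
Qed.

Lemma rsum_incl_eq F l1 l2 :
  NoDup l1 -> NoDup l2 -> incl l1 l2 -> (forall x, In x l2 -> ~ In x l1 -> F x = 0) ->
  rsum F l2 = rsum F l1.
Proof.
  intros H1 H2 Hi HF. rewrite (rsum_filter_split F (in_listb l1)), rsum_filter_incl by auto.
  rewrite (rsum_zero F (filter _ l2)); [lra|]. intros x. rewrite filter_In. unfold in_listb.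
  destruct (in_dec eq_dec x l1); simpl; [intros [_ Hf]; discriminate | intros [Hx _]; auto].
Qed.

Lemma rsum_incl_le F l1 l2 :
  (forall x, 0 <= F x) -> NoDup l1 -> NoDup l2 -> incl l1 l2 -> rsum F l1 <= rsum F l2.
Proof.
  intros HF H1 H2 Hi. rewrite (rsum_filter_split F (in_listb l1) l2), rsum_filter_incl by auto.
  pose proof (rsum_nonneg F (filter (fun x => negb (in_listb l1 x)) l2) (fun x _ => HF x)). lra.
Qed.

Lemma rsum_delta (c : X -> R) x l :
  NoDup l -> In x l -> rsum (fun y => c y * delta x y) l = c x.
Proof.
  intros Hn Hi. rewrite (rsum_incl_eq _ (x :: nil) l).
  - simpl. rewrite delta_refl. lra.
  - repeat constructor; auto.
  - auto.
  - intros z [E|[]]; subst; auto.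
  - intros z _ Hz. rewrite delta_neq; [lra|]. intros ->. auto with datatypes.
Qed.

Lemma rsum_pick F x l :
  NoDup l -> In x l -> rsum F l = F x + rsum (fun y => if dec (y = x) then 0 else F y) l.
Proof.
  intros Hn Hx. rewrite <- (rsum_delta F x l Hn Hx), <- rsum_plus. apply rsum_ext. intros y.
  unfold delta. destruct (dec (x = y)), (dec (y = x)); subst; try congruence; ring.
Qed.

End ListSums.

Lemma rsum_map {A B} (F : B -> R) (g : A -> B) l :
  rsum F (map g l) = rsum (fun a => F (g a)) l.
Proof. induction l as [|a l IH]; unfold rsum in *; simpl; auto. rewrite IH; auto. Qed.

Lemma rsum_concat_map {A B} (F : B -> R) (g : A -> list B) l :
  rsum F (concat (map g l)) = rsum (fun a => rsum F (g a)) l.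
Proof. induction l as [|a l IH]; simpl; auto. rewrite rsum_app, IH. reflexivity. Qed.

Lemma rsum_swap {A B} (F : A -> B -> R) l1 l2 :
  rsum (fun a => rsum (F a) l2) l1 = rsum (fun b => rsum (fun a => F a b) l1) l2.
Proof.
  induction l1 as [|a l1 IH]; simpl.
  - symmetry. apply rsum_zero. reflexivity.
  - change (rsum (fun a0 => rsum (F a0) l2) (a :: l1)) with (rsum (F a) l2 + rsum (fun a0 => rsum (F a0) l2) l1).
    rewrite IH, <- rsum_plus. reflexivity.
Qed.

Lemma rsum_mult {A} (F G : A -> R) l :
  rsum F l * rsum G l = rsum (fun x => rsum (fun y => F x * G y) l) l.
Proof. rewrite <- rsum_scal_r. apply rsum_ext. intros x. rewrite rsum_scal_l. reflexivity. Qed.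

Lemma in_concat_map {A B} (g : A -> list B) l b :
  In b (concat (map g l)) <-> exists a, In a l /\ In b (g a).
Proof.
  rewrite in_concat. split.
  - intros [x [Hx Hb]]. apply in_map_iff in Hx. destruct Hx as [a [<- Ha]]. eauto.
  - intros [a [Ha Hb]]. exists (g a). auto using in_map.
Qed.

Lemma NoDup_concat_map {A B} (g : A -> list B) l :
  NoDup l -> (forall a, In a l -> NoDup (g a)) ->
  (forall a a' b, In a l -> In a' l -> In b (g a) -> In b (g a') -> a = a') ->
  NoDup (concat (map g l)).
Proof.
  induction l as [|a l IH]; intros Hl Hg Hd; simpl; [constructor|].
  inversion Hl; subst. apply NoDup_app.
  - apply Hg; left; auto.
  - apply IH; auto; intros; [apply Hg | eapply Hd]; eauto; right; auto.
  - intros b Hb Hb'. apply in_concat_map in Hb'. destruct Hb' as [a' [Ha' Hba']].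
    assert (a = a') by (eapply Hd; eauto; [left | right]; auto). subst. contradiction.
Qed.

Lemma C_ext (a b : C) : fst a = fst b -> snd a = snd b -> a = b.
Proof. destruct a, b; simpl; intros; subst; auto. Qed.

Lemma Cnorm2_nonneg (a : C) : 0 <= Cnorm2 a.
Proof. unfold Cnorm2. nra. Qed.

Lemma Cnorm2_le0 (a : C) : Cnorm2 a <= 0 -> a = C0.
Proof. destruct a as [x y]; unfold Cnorm2, C0; simpl. intros. f_equal; nra. Qed.

Lemma Cnorm2_C0 : Cnorm2 C0 = 0.
Proof. unfold Cnorm2, C0; simpl; ring. Qed.

Lemma Cnorm2_RtoC r : Cnorm2 (RtoC r) = r * r.
Proof. unfold Cnorm2, RtoC; simpl; ring. Qed.

Lemma Cnorm2_mul a b : Cnorm2 (Cmul a b) = Cnorm2 a * Cnorm2 b.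
Proof. destruct a, b; unfold Cnorm2, Cmul; simpl; ring. Qed.

Lemma Cmul_RtoC (r : R) (z : C) : Cmul (RtoC r) z = (r * fst z, r * snd z).
Proof. destruct z; unfold Cmul, RtoC; apply C_ext; simpl; ring. Qed.

Lemma Cmul_C0 a : Cmul a C0 = C0.
Proof. destruct a; unfold Cmul, C0; apply C_ext; simpl; ring. Qed.

Lemma Cadd_C0 a : Cadd a C0 = a.
Proof. destruct a; unfold Cadd, C0; apply C_ext; simpl; ring. Qed.

Lemma Cadd_C0l a : Cadd C0 a = a.
Proof. destruct a; unfold Cadd, C0; apply C_ext; simpl; ring. Qed.

Definition C1 : C := RtoC 1.

Lemma Cnorm2_C1 : Cnorm2 C1 = 1.
Proof. unfold Cnorm2, C1, RtoC; simpl; ring. Qed.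

Lemma C1_neq_C0 : C1 <> C0.
Proof. unfold C1, RtoC, C0. intros H. injection H. lra. Qed.

Definition Cconj (a : C) : C := (fst a, - snd a).

Lemma Cnorm2_conj a : Cnorm2 (Cconj a) = Cnorm2 a.
Proof. destruct a; unfold Cnorm2, Cconj; simpl; ring. Qed.

Lemma Cmul_conj_l a b : Cmul (Cmul (Cconj a) b) a = Cmul (RtoC (Cnorm2 a)) b.
Proof. destruct a, b; unfold Cnorm2, Cconj, Cmul, RtoC; apply C_ext; simpl; ring. Qed.

Section L2.
Context {X : Type}.
Implicit Types (f h : X -> C) (l : list X).

Lemma sqsum_rsum f l : sqsum f l = rsum (fun x => Cnorm2 (f x)) l.
Proof. reflexivity. Qed.

Lemma sqsum_incl_le f l1 l2 : NoDup l1 -> NoDup l2 -> incl l1 l2 -> sqsum f l1 <= sqsum f l2.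
Proof. intros; apply rsum_incl_le; auto. intros; apply Cnorm2_nonneg. Qed.

Lemma l2_sqnorm_exists f : in_l2 f -> exists s, l2_sqnorm f s.
Proof.
  intros [M HM]. destruct (completeness (fun x => exists l, NoDup l /\ x = sqsum f l)) as [s Hs].
  - exists M. intros x [l [Hl ->]]. auto.
  - exists 0, nil. split; [constructor | reflexivity].
  - exists s. exact Hs.
Qed.

Lemma l2_sqnorm_unique f s s' : l2_sqnorm f s -> l2_sqnorm f s' -> s = s'.
Proof. intros [H1 H2] [H3 H4]. apply Rle_antisym; auto. Qed.

Lemma l2_sqnorm_in_l2 f s : l2_sqnorm f s -> in_l2 f.
Proof. intros [H _]. exists s. intros l Hl. apply H. exists l; auto. Qed.

Lemma sqsum_le_l2_sqnorm f s l : l2_sqnorm f s -> NoDup l -> sqsum f l <= s.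
Proof. intros [H _] Hl. apply H. exists l; auto. Qed.

Lemma l2_sqnorm_intro f s :
  (forall l, NoDup l -> sqsum f l <= s) ->
  (forall b, (forall l, NoDup l -> sqsum f l <= b) -> s <= b) -> l2_sqnorm f s.
Proof.
  intros Hub Hlub. split.
  - intros x [l [Hl ->]]. auto.
  - intros b Hb. apply Hlub. intros l Hl. apply Hb. exists l; auto.
Qed.

Lemma l2_sqnorm_zero : l2_sqnorm (fun _ : X => C0) 0.
Proof.
  apply l2_sqnorm_intro.
  - intros l _. rewrite sqsum_rsum, rsum_zero; [lra|]. intros; apply Cnorm2_C0.
  - intros b Hb. apply (Hb nil). constructor.
Qed.

Definition upd h p c : X -> C := fun y => if dec (y = p) then c else h y.

Lemma sqsum_upd h p c l : NoDup l -> In p l ->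
  sqsum (upd h p c) l = sqsum h l - Cnorm2 (h p) + Cnorm2 c.
Proof.
  intros Hn Hp. rewrite !sqsum_rsum, (rsum_pick (fun x => Cnorm2 (upd h p c x)) p l Hn Hp),
    (rsum_pick (fun x => Cnorm2 (h x)) p l Hn Hp).
  unfold upd at 1. destruct (dec (p = p)); [|congruence].
  rewrite (rsum_ext (fun y => if dec (y = p) then 0 else Cnorm2 (upd h p c y))
                    (fun y => if dec (y = p) then 0 else Cnorm2 (h y))); [ring|].
  intros y. unfold upd. destruct (dec (y = p)); reflexivity.
Qed.

Lemma l2_sqnorm_upd h p c s : l2_sqnorm h s ->
  l2_sqnorm (upd h p c) (s - Cnorm2 (h p) + Cnorm2 c).
Proof.
  intros Hs. set (ext := fun l => nodup eq_dec (p :: l)).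
  assert (Hext : forall l, NoDup l -> NoDup (ext l) /\ In p (ext l) /\ incl l (ext l)).
  { intros l Hl. unfold ext. split; [apply NoDup_nodup|]. split.
    - apply nodup_In. left; auto.
    - intros x Hx. apply nodup_In. right; auto. }
  apply l2_sqnorm_intro.
  - intros l Hl. destruct (Hext l Hl) as (Hn & Hp & Hi).
    apply Rle_trans with (sqsum (upd h p c) (ext l)); [apply sqsum_incl_le; auto|].
    rewrite sqsum_upd by auto. pose proof (sqsum_le_l2_sqnorm h s (ext l) Hs Hn). lra.
  - intros b Hb. assert (s <= b + Cnorm2 (h p) - Cnorm2 c); [|lra].
    destruct Hs as [_ Hs]. apply Hs. intros x [l [Hl ->]]. destruct (Hext l Hl) as (Hn & Hp & Hi).
    apply Rle_trans with (sqsum h (ext l)); [apply sqsum_incl_le; auto|].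
    specialize (Hb (ext l) Hn). rewrite sqsum_upd in Hb by auto. lra.
Qed.

Definition single p c : X -> C := upd (fun _ => C0) p c.

Lemma l2_sqnorm_single p c : l2_sqnorm (single p c) (Cnorm2 c).
Proof.
  replace (Cnorm2 c) with (0 - Cnorm2 C0 + Cnorm2 c) by (rewrite Cnorm2_C0; ring).
  apply l2_sqnorm_upd, l2_sqnorm_zero.
Qed.

Lemma in_l2_single p c : in_l2 (single p c).
Proof. eapply l2_sqnorm_in_l2, l2_sqnorm_single. Qed.

Lemma weighted_sqsum_deficit h (w : X -> R) (c s : R) (z0 : X) :
  l2_sqnorm h s -> 0 <= c -> (forall z, 0 <= w z) -> (forall z, w z * Cnorm2 (h z) <= c * Cnorm2 (h z)) ->
  forall l, NoDup l -> rsum (fun z => w z * Cnorm2 (h z)) l <= c * s - (c - w z0) * Cnorm2 (h z0).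
Proof.
  intros Hs Hc Hw Hwc l Hl. set (l' := nodup eq_dec (z0 :: l)).
  assert (Hn : NoDup l') by apply NoDup_nodup.
  assert (Hz0 : In z0 l') by (apply nodup_In; left; auto).
  assert (Hle : rsum (fun z => w z * Cnorm2 (h z)) l <= rsum (fun z => w z * Cnorm2 (h z)) l').
  { apply rsum_incl_le; auto.
    - intros z. pose proof (Hw z); pose proof (Cnorm2_nonneg (h z)); nra.
    - intros x Hx. apply nodup_In. right; auto. }
  pose proof (sqsum_le_l2_sqnorm h s l' Hs Hn) as Hsum. rewrite sqsum_rsum in Hsum.
  rewrite (rsum_pick (fun z => w z * Cnorm2 (h z)) z0 l' Hn Hz0) in Hle.
  rewrite (rsum_pick (fun z => Cnorm2 (h z)) z0 l' Hn Hz0) in Hsum.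
  assert (Hrest : 0 <= rsum (fun y => if dec (y = z0) then 0 else c * Cnorm2 (h y)) l'
                     - rsum (fun y => if dec (y = z0) then 0 else w y * Cnorm2 (h y)) l').
  { rewrite <- rsum_minus. apply rsum_nonneg. intros z _.
    destruct (dec (z = z0)); [lra|]. specialize (Hwc z). lra. }
  rewrite (rsum_ext (fun y => if dec (y = z0) then 0 else c * Cnorm2 (h y))
                    (fun y => c * (if dec (y = z0) then 0 else Cnorm2 (h y)))) in Hrest
    by (intros y; destruct (dec (y = z0)); ring).
  rewrite rsum_scal_l in Hrest.
  assert (c * rsum (fun y => if dec (y = z0) then 0 else Cnorm2 (h y)) l' <= c * (s - Cnorm2 (h z0)))
    by (apply Rmult_le_compat_l; lra).
  lra.
Qed.

End L2.

(** * Graded index sets and level-preserving kernels *)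

Definition level_enum {Z : Type} (lz : Z -> nat) (LZ : nat -> list Z) : Prop :=
  (forall t, NoDup (LZ t)) /\ (forall t z, In z (LZ t) <-> lz z = t).

Definition lower_levels {Z : Type} (LZ : nat -> list Z) (T : nat) : list Z :=
  concat (map LZ (seq 0 T)).

Lemma rsum_lower_levels {Z} (F : Z -> R) LZ T :
  rsum F (lower_levels LZ T) = rsum (fun t => rsum F (LZ t)) (seq 0 T).
Proof. apply rsum_concat_map. Qed.

Section Graded.
Context {Z : Type} (lz : Z -> nat) (LZ : nat -> list Z).
Hypothesis HL : level_enum lz LZ.

Lemma in_lower_levels T z : In z (lower_levels LZ T) <-> (lz z < T)%nat.
Proof.
  destruct HL as [_ H]. unfold lower_levels. rewrite in_concat_map. split.
  - intros [t [Ht Hz]]. apply in_seq in Ht. apply H in Hz. lia.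
  - intros Hl. exists (lz z). split; [apply in_seq; lia | apply H; auto].
Qed.

Lemma NoDup_lower_levels T : NoDup (lower_levels LZ T).
Proof.
  destruct HL as [H1 H2]. apply NoDup_concat_map; auto using seq_NoDup.
  intros a a' b _ _ Ha Hb. apply H2 in Ha. apply H2 in Hb. congruence.
Qed.

Lemma incl_lower_levels l : exists T, incl l (lower_levels LZ T).
Proof.
  induction l as [|a l [T HT]]; [exists O; intros ? []|].
  exists (S (Nat.max T (lz a))). intros z [<-|Hz]; apply in_lower_levels; [lia|].
  apply HT, in_lower_levels in Hz. lia.
Qed.

Lemma sqsum_le_lower_levels (f : Z -> C) l :
  NoDup l -> exists T, sqsum f l <= sqsum f (lower_levels LZ T).
Proof.
  intros Hl. destruct (incl_lower_levels l) as [T HT]. exists T.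
  apply sqsum_incl_le; auto using NoDup_lower_levels.
Qed.

Lemma shift_sqsum_le (g h : Z -> C) (w : Z -> R) c s z0 :
  sqsum g (LZ O) = 0 ->
  (forall t, sqsum g (LZ (S t)) = rsum (fun z => w z * Cnorm2 (h z)) (LZ t)) ->
  l2_sqnorm h s -> 0 <= c -> (forall z, 0 <= w z) ->
  (forall z, w z * Cnorm2 (h z) <= c * Cnorm2 (h z)) ->
  forall l, NoDup l -> sqsum g l <= c * s - (c - w z0) * Cnorm2 (h z0).
Proof.
  intros H0 HS Hs Hc Hw Hwc l Hl. destruct (sqsum_le_lower_levels g l Hl) as [T HT].
  apply Rle_trans with (sqsum g (lower_levels LZ (S T))).
  { apply Rle_trans with (sqsum g (lower_levels LZ T)); auto.
    apply sqsum_incl_le; auto using NoDup_lower_levels.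
    intros z Hz. apply in_lower_levels in Hz. apply in_lower_levels. lia. }
  rewrite sqsum_rsum, rsum_lower_levels, <- cons_seq, rsum_cons, <- seq_shift, rsum_map.
  rewrite <- sqsum_rsum, H0, Rplus_0_l.
  rewrite (rsum_ext _ (fun t => rsum (fun z => w z * Cnorm2 (h z)) (LZ t)))
    by (intros t; rewrite <- sqsum_rsum; apply HS).
  rewrite <- rsum_lower_levels.
  apply weighted_sqsum_deficit; auto using NoDup_lower_levels.
Qed.

End Graded.

Lemma l2_shift_le {Z} lz (LZ : nat -> list Z) (g h : Z -> C) (w : Z -> R) c s z0 :
  level_enum lz LZ -> sqsum g (LZ O) = 0 ->
  (forall t, sqsum g (LZ (S t)) = rsum (fun z => w z * Cnorm2 (h z)) (LZ t)) ->
  l2_sqnorm h s -> 0 <= c -> (forall z, 0 <= w z) ->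
  (forall z, w z * Cnorm2 (h z) <= c * Cnorm2 (h z)) ->
  in_l2 g /\ forall s', l2_sqnorm g s' -> s' <= c * s - (c - w z0) * Cnorm2 (h z0).
Proof.
  intros HL H0 HS Hs Hc Hw Hwc. pose proof (shift_sqsum_le lz LZ HL g h w c s z0 H0 HS Hs Hc Hw Hwc) as Hle.
  split.
  - exists (c * s - (c - w z0) * Cnorm2 (h z0)). exact Hle.
  - intros s' [_ Hs']. apply Hs'. intros x [l [Hl ->]]. auto.
Qed.

Definition kernel_apply {X Y : Type} (LX : nat -> list X) (ly : Y -> nat) (K : Y -> X -> R)
  (a : X -> R) (y : Y) : R :=
  rsum (fun x => K y x * a x) (LX (ly y)).

Definition level_op {X Y : Type} (LX : nat -> list X) (ly : Y -> nat) (K : Y -> X -> R)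
  (f : X -> C) (y : Y) : C :=
  (kernel_apply LX ly K (fun x => fst (f x)) y, kernel_apply LX ly K (fun x => snd (f x)) y).

Definition orthonormal_columns {X Y : Type} (LX : nat -> list X) (LY : nat -> list Y)
  (K : Y -> X -> R) : Prop :=
  forall t x x', In x (LX t) -> In x' (LX t) -> rsum (fun y => K y x * K y x') (LY t) = delta x x'.

Section LevelOperator.
Context {X Y : Type} (lx : X -> nat) (LX : nat -> list X) (ly : Y -> nat) (LY : nat -> list Y).
Hypotheses (HX : level_enum lx LX) (HY : level_enum ly LY).
Variable K : Y -> X -> R.

Lemma rsum_sq_kernel_apply (a : X -> R) t :
  orthonormal_columns LX LY K ->
  rsum (fun y => kernel_apply LX ly K a y * kernel_apply LX ly K a y) (LY t) = rsum (fun x => a x * a x) (LX t).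
Proof.
  intros Hc. destruct HX as [HX1 _]. destruct HY as [_ HY2].
  rewrite (rsum_ext_in _ (fun y => rsum (fun x => rsum (fun x' => (K y x * a x) * (K y x' * a x')) (LX t)) (LX t)))
    by (intros y Hy; apply HY2 in Hy; unfold kernel_apply; rewrite Hy; apply rsum_mult).
  rewrite rsum_swap. apply rsum_ext_in. intros x Hx.
  rewrite rsum_swap, (rsum_ext_in _ (fun x' => (a x * a x') * delta x x')).
  - apply (rsum_delta (fun x' => a x * a x')); auto.
  - intros x' Hx'. rewrite <- (Hc t x x'), <- rsum_scal_l by auto. apply rsum_ext. intros; ring.
Qed.

Lemma sqsum_level_op_lower_levels (f : X -> C) T :
  orthonormal_columns LX LY K ->
  sqsum (level_op LX ly K f) (lower_levels LY T) = sqsum f (lower_levels LX T).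
Proof.
  intros Hc. rewrite !sqsum_rsum, !rsum_lower_levels. apply rsum_ext. intros t.
  unfold level_op, Cnorm2; simpl. rewrite !rsum_plus, !rsum_sq_kernel_apply by auto. reflexivity.
Qed.

Lemma level_op_isometry :
  orthonormal_columns LX LY K ->
  forall f s, l2_sqnorm f s -> l2_sqnorm (level_op LX ly K f) s.
Proof.
  intros Hc f s Hs. apply l2_sqnorm_intro.
  - intros l Hl. destruct (sqsum_le_lower_levels ly LY HY (level_op LX ly K f) l Hl) as [T HT].
    rewrite sqsum_level_op_lower_levels in HT by auto.
    pose proof (sqsum_le_l2_sqnorm f s _ Hs (NoDup_lower_levels lx LX HX T)). lra.
  - intros b Hb. destruct Hs as [_ Hs]. apply Hs. intros x [l [Hl ->]].
    destruct (sqsum_le_lower_levels lx LX HX f l Hl) as [T HT].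
    rewrite <- (sqsum_level_op_lower_levels f T Hc) in HT.
    specialize (Hb _ (NoDup_lower_levels ly LY HY T)). lra.
Qed.

Lemma level_op_in_l2 :
  orthonormal_columns LX LY K -> forall f, in_l2 f -> in_l2 (level_op LX ly K f).
Proof.
  intros Hc f Hf. destruct (l2_sqnorm_exists f Hf) as [s Hs].
  eapply l2_sqnorm_in_l2, level_op_isometry; eauto.
Qed.

Lemma kernel_apply_transpose (b : Y -> R) y :
  orthonormal_columns LY LX (fun x y => K y x) ->
  kernel_apply LX ly K (kernel_apply LY lx (fun x y => K y x) b) y = b y.
Proof.
  intros Hr. destruct HX as [_ HX2]. destruct HY as [HY1 HY2].
  assert (Hy : In y (LY (ly y))) by (apply HY2; auto).
  unfold kernel_apply.
  rewrite (rsum_ext_in _ (fun x => rsum (fun y' => K y x * K y' x * b y') (LY (ly y)))).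
  - rewrite rsum_swap, (rsum_ext_in _ (fun y' => b y' * delta y y')).
    + apply (rsum_delta b); auto.
    + intros y' Hy'. rewrite <- (Hr (ly y)), <- rsum_scal_l by auto. apply rsum_ext; intros; ring.
  - intros x Hx. apply HX2 in Hx. rewrite Hx, <- rsum_scal_l. apply rsum_ext; intros; ring.
Qed.

End LevelOperator.

Lemma level_op_unitary {X Y} lx (LX : nat -> list X) ly (LY : nat -> list Y) K :
  level_enum lx LX -> level_enum ly LY ->
  orthonormal_columns LX LY K -> orthonormal_columns LY LX (fun x y => K y x) ->
  is_unitary (level_op LX ly K).
Proof.
  intros HX HY Hc Hr. split; [|split; [|split]].
  - apply (level_op_in_l2 lx LX ly LY HX HY K Hc).
  - intros a f g _ _ y. unfold level_op, kernel_apply, Cadd, Cmul. apply C_ext; simpl.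
    + rewrite <- !rsum_scal_l, <- rsum_minus, <- rsum_plus. apply rsum_ext. intros; ring.
    + rewrite <- !rsum_scal_l, <- !rsum_plus. apply rsum_ext. intros; ring.
  - intros f s _. apply (level_op_isometry lx LX ly LY HX HY K Hc).
  - intros g Hg. exists (level_op LY lx (fun x y => K y x) g). split.
    + apply (level_op_in_l2 ly LY lx LX HY HX _ Hr g Hg).
    + intros y. unfold level_op at 1. simpl.
      rewrite !(kernel_apply_transpose lx LX ly LY HX HY K) by auto. apply C_ext; reflexivity.
Qed.

Section Tree.
Context {V : Type} (E : V -> V -> Prop) (root : V).
Hypothesis HT : rooted_directed_tree E root.

Lemma no_parent_root v : ~ E v root.
Proof. destruct HT as (_ & _ & H & _). apply H. Qed.

Lemma parent_unique v v' u : E v u -> E v' u -> v = v'.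
Proof.
  intros H1 H2. destruct HT as (_ & _ & _ & Hu).
  assert (u <> root) by (intros ->; eapply no_parent_root; eauto).
  destruct (Hu u H) as [w [_ Hw]]. rewrite <- (Hw v H1), <- (Hw v' H2). reflexivity.
Qed.

Lemma depth_O_inv v : depth E root v O -> v = root.
Proof. intros H; inversion H; reflexivity. Qed.

Lemma depth_S_inv u n : depth E root u (S n) -> exists v, depth E root v n /\ E v u.
Proof. intros H; inversion H; eauto. Qed.

Lemma depth_unique v n n' : depth E root v n -> depth E root v n' -> n = n'.
Proof.
  intros H. revert n'. induction H as [|v u n Hv IH Hvu]; intros [|n'] H'.
  - reflexivity.
  - destruct (depth_S_inv _ _ H') as [w [_ Hw]]. exfalso; eapply no_parent_root; eauto.
  - apply depth_O_inv in H'. rewrite H' in Hvu. exfalso; eapply no_parent_root; eauto.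
  - destruct (depth_S_inv _ _ H') as [w [Hw Ew]]. f_equal. apply IH.
    replace v with w by (eapply parent_unique; eauto). assumption.
Qed.

(** Having a depth propagates along edges in both directions, hence along the
    connectedness closure from the root. *)
Lemma depth_exists v : exists n, depth E root v n.
Proof.
  pose proof HT as (_ & Hc & _ & _).
  assert (Hstep : forall a b, E a b -> ((exists n, depth E root a n) <-> (exists n, depth E root b n))).
  { intros a b Hab. split.
    - intros [n Hn]. exists (S n). econstructor; eauto.
    - intros [[|n] Hn].
      + apply depth_O_inv in Hn. rewrite Hn in Hab. exfalso; eapply no_parent_root; eauto.
      + destruct (depth_S_inv _ _ Hn) as [w [Hw Ew]]. exists n.
        replace a with w by (eapply parent_unique; eauto). assumption. }
  assert (Hall : forall a b, clos_refl_sym_trans V E a b ->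
            ((exists n, depth E root a n) <-> (exists n, depth E root b n))).
  { intros a b Hab. induction Hab; try tauto. apply Hstep; auto. }
  apply (Hall root v (Hc root v)). exists O. constructor.
Qed.

Definition dep (v : V) : nat := proj1_sig (constructive_indefinite_description _ (depth_exists v)).

Lemma dep_spec v : depth E root v (dep v).
Proof. unfold dep. destruct (constructive_indefinite_description _ _). assumption. Qed.

Lemma dep_eq v n : depth E root v n -> dep v = n.
Proof. intros H. eapply depth_unique; eauto using dep_spec. Qed.

Lemma dep_root : dep root = O.
Proof. apply dep_eq. constructor. Qed.

Lemma dep_edge v u : E v u -> dep u = S (dep v).
Proof. intros H. apply dep_eq. econstructor; eauto using dep_spec. Qed.

Lemma dep_eq_0 v : dep v = O -> v = root.
Proof. intros H. apply depth_O_inv. rewrite <- H. apply dep_spec. Qed.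

Lemma dep_eq_S u n : dep u = S n -> exists v, E v u /\ dep v = n.
Proof.
  intros H. pose proof (dep_spec u) as Hd. rewrite H in Hd.
  destruct (depth_S_inv _ _ Hd) as [v [Hv Ev]]. exists v. split; auto using dep_eq.
Qed.

Lemma parent_of_edge v u : E v u -> parent E u = Some v.
Proof.
  intros H. unfold parent. destruct (excluded_middle_informative _) as [e|n].
  - destruct (constructive_indefinite_description _ e) as [w Hw]. simpl. f_equal.
    eapply parent_unique; eauto.
  - exfalso; eauto.
Qed.

Lemma parent_root : parent E root = None.
Proof.
  unfold parent. destruct (excluded_middle_informative _) as [[w Hw]|n]; auto.
  exfalso; eapply no_parent_root; eauto.
Qed.

Lemma weighted_shift_edge lam f v u : E v u -> weighted_shift E lam f u = Cmul (RtoC (lam u)) (f v).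
Proof. intros H. unfold weighted_shift. rewrite (parent_of_edge v u H). reflexivity. Qed.

Lemma weighted_shift_root lam f : weighted_shift E lam f root = C0.
Proof. unfold weighted_shift. rewrite parent_root. reflexivity. Qed.

Lemma exists_vertex_of_depth : leafless E -> forall t, exists v, dep v = t.
Proof.
  intros Hl t. induction t as [|t [v Hv]]; [exists root; apply dep_root|].
  destruct (Hl v) as [u Hu]. exists u. rewrite (dep_edge v u Hu), Hv. reflexivity.
Qed.

Variable Hlf : locally_finite E.

Definition children (v : V) : list V :=
  nodup eq_dec (proj1_sig (constructive_indefinite_description _ (Hlf v))).

Lemma NoDup_children v : NoDup (children v).
Proof. apply NoDup_nodup. Qed.

Lemma in_children v u : In u (children v) <-> E v u.
Proof.
  unfold children. rewrite nodup_In. destruct (constructive_indefinite_description _ _) as [l Hl].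
  simpl. rewrite Hl. tauto.
Qed.

Lemma chi_card_children v : chi_card E v (length (children v)).
Proof. exists (children v). repeat split; auto using NoDup_children; apply in_children. Qed.

Lemma length_children_pos v : leafless E -> (1 <= length (children v))%nat.
Proof.
  intros Hl. destruct (Hl v) as [u Hu]. apply in_children in Hu.
  destruct (children v); [contradiction | simpl; lia].
Qed.

Fixpoint level (t : nat) : list V :=
  match t with
  | O => root :: nil
  | S t => concat (map children (level t))
  end.

Lemma in_level t v : In v (level t) <-> dep v = t.
Proof.
  revert v. induction t as [|t IH]; intros v; simpl.
  - split; [intros [<-|[]]; apply dep_root | intros H; left; symmetry; apply dep_eq_0; auto].
  - rewrite in_concat_map. split.
    + intros [w [Hw Hv]]. apply in_children in Hv. apply IH in Hw. rewrite (dep_edge w v Hv), Hw. auto.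
    + intros H. destruct (dep_eq_S v t H) as [w [Ew Hw]]. exists w.
      split; [apply IH | apply in_children]; auto.
Qed.

Lemma level_enum_dep : level_enum dep level.
Proof.
  split; [|exact in_level]. intros t. induction t as [|t IH]; simpl.
  - repeat constructor. auto.
  - apply NoDup_concat_map; auto using NoDup_children.
    intros a a' b _ _ Ha Ha'. apply in_children in Ha. apply in_children in Ha'.
    eapply parent_unique; eauto.
Qed.

Lemma rsum_level_S (F : V -> R) t :
  rsum F (level (S t)) = rsum (fun v => rsum F (children v)) (level t).
Proof. apply rsum_concat_map. Qed.

Lemma rsum_level_S_children (F : V -> R) t v :
  dep v = t -> (forall x, ~ In x (children v) -> F x = 0) ->
  rsum F (level (S t)) = rsum F (children v).
Proof.
  intros Hv HF. apply rsum_incl_eq; auto using NoDup_children.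
  - apply level_enum_dep.
  - intros x Hx. apply in_children in Hx. apply in_level. rewrite (dep_edge v x Hx), Hv. reflexivity.
Qed.

End Tree.

(* [dweight q n] is the squared weight of the classical Dirichlet shift from [e_n] to [e_(n+1)]. *)
Definition dweight (q : R) (n : nat) : R := (INR n + q) / (INR n + 1).

Lemma dweight_pos q n : 1 <= q -> 0 < dweight q n.
Proof. intros. unfold dweight. pose proof (pos_INR n). apply Rdiv_lt_0_compat; lra. Qed.

Lemma dweight_O q : dweight q O = q.
Proof. unfold dweight. simpl. field. Qed.

Lemma dweight_1 n : dweight 1 n = 1.
Proof. unfold dweight. pose proof (pos_INR n). field. lra. Qed.

Lemma dweight_diff q n n' :
  dweight q n - dweight q n' = (q - 1) * (INR n' - INR n) / ((INR n + 1) * (INR n' + 1)).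
Proof. pose proof (pos_INR n). pose proof (pos_INR n'). unfold dweight; field; lra. Qed.

Lemma dweight_le q n n' : 1 <= q -> (n <= n')%nat -> dweight q n' <= dweight q n.
Proof.
  intros Hq Hn. apply le_INR in Hn. pose proof (pos_INR n). pose proof (dweight_diff q n n').
  assert (0 <= (q - 1) * (INR n' - INR n) / ((INR n + 1) * (INR n' + 1))); [|lra].
  unfold Rdiv. apply Rmult_le_pos; [apply Rmult_le_pos | left; apply Rinv_0_lt_compat]; nra.
Qed.

Lemma dweight_lt q n n' : 1 < q -> (n < n')%nat -> dweight q n' < dweight q n.
Proof.
  intros Hq Hn. apply lt_INR in Hn. pose proof (pos_INR n). pose proof (dweight_diff q n n').
  assert (0 < (q - 1) * (INR n' - INR n) / ((INR n + 1) * (INR n' + 1))); [|lra].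
  unfold Rdiv. apply Rmult_lt_0_compat; [apply Rmult_lt_0_compat | apply Rinv_0_lt_compat]; nra.
Qed.

Lemma dweight_le_q q n : 1 <= q -> dweight q n <= q.
Proof. intros Hq. rewrite <- (dweight_O q) at 2. apply dweight_le; auto; lia. Qed.

Section DirichletTree.
Context {V : Type} (E : V -> V -> Prop) (root : V).
Hypotheses (HT : rooted_directed_tree E root) (Hlf : locally_finite E) (Hleaf : leafless E).
Variables (q : R) (lam : V -> R).
Hypotheses (Hq : 1 <= q) (Hlam : dirichlet_weights E root q lam).

Lemma dirichlet_weight_edge v u :
  E v u -> lam u = / sqrt (INR (length (children E Hlf v))) * sqrt (dweight q (dep E root HT v)).
Proof. intros Hu. apply (Hlam v u); auto using dep_spec, chi_card_children. Qed.

Lemma dirichlet_weight_sq v u :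
  E v u -> lam u * lam u = dweight q (dep E root HT v) / INR (length (children E Hlf v)).
Proof.
  intros Hu. rewrite (dirichlet_weight_edge v u Hu).
  set (k := INR (length (children E Hlf v))). set (w := dweight q (dep E root HT v)).
  assert (0 < k) by (apply lt_0_INR, length_children_pos; auto).
  assert (0 < w) by (apply dweight_pos; auto).
  assert (0 < sqrt k) by (apply sqrt_lt_R0; auto).
  transitivity (sqrt w * sqrt w / (sqrt k * sqrt k)); [field; lra|].
  rewrite !sqrt_sqrt by lra. reflexivity.
Qed.

Lemma rsum_children_weight_sq v :
  rsum (fun u => lam u * lam u) (children E Hlf v) = dweight q (dep E root HT v).
Proof.
  rewrite (rsum_ext_in _ (fun _ => dweight q (dep E root HT v) / INR (length (children E Hlf v))))
    by (intros u Hu; apply in_children in Hu; apply dirichlet_weight_sq; auto).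
  rewrite rsum_const. assert (0 < INR (length (children E Hlf v))) by (apply lt_0_INR, length_children_pos; auto).
  field. lra.
Qed.

Lemma sqsum_shift_level_S f t :
  sqsum (weighted_shift E lam f) (level E root Hlf (S t))
  = rsum (fun v => dweight q (dep E root HT v) * Cnorm2 (f v)) (level E root Hlf t).
Proof.
  rewrite sqsum_rsum, rsum_level_S. apply rsum_ext. intros v.
  rewrite (rsum_ext_in _ (fun u => lam u * lam u * Cnorm2 (f v))), rsum_scal_r, rsum_children_weight_sq;
    [reflexivity|].
  intros u Hu. apply in_children in Hu. rewrite (weighted_shift_edge E root HT lam f v u Hu).
  rewrite Cnorm2_mul, Cnorm2_RtoC. reflexivity.
Qed.

Lemma weighted_shift_l2 f s :
  l2_sqnorm f s ->
  in_l2 (weighted_shift E lam f) /\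
  forall s' x, l2_sqnorm (weighted_shift E lam f) s' ->
          s' <= q * s - (q - dweight q (dep E root HT x)) * Cnorm2 (f x).
Proof.
  intros Hs.
  assert (Hshift : forall x, in_l2 (weighted_shift E lam f) /\ forall s', l2_sqnorm (weighted_shift E lam f) s' ->
            s' <= q * s - (q - dweight q (dep E root HT x)) * Cnorm2 (f x)).
  { intros x. apply (l2_shift_le (dep E root HT) (level E root Hlf) _ f (fun v => dweight q (dep E root HT v)));
      auto using level_enum_dep.
    - simpl. unfold sqsum; simpl. rewrite weighted_shift_root, Cnorm2_C0 by auto. ring.
    - apply sqsum_shift_level_S.
    - lra.
    - intros z. left. apply dweight_pos; auto.
    - intros z. apply Rmult_le_compat_r; auto using Cnorm2_nonneg, dweight_le_q. }
  split; [apply (Hshift root)|]. intros s' x. apply Hshift.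
Qed.

End DirichletTree.

Definition model_index (m : nat) : Type := ({i : nat | (i < m)%nat} * nat)%type.

Definition copies (m : nat) : list {i : nat | (i < m)%nat} :=
  concat (map (fun i => match lt_dec i m with left H => exist _ i H :: nil | right _ => nil end) (seq 0 m)).

Lemma in_copies m i : In i (copies m).
Proof.
  destruct i as [i Hi]. unfold copies. apply in_concat_map. exists i. split; [apply in_seq; lia|].
  destruct (lt_dec i m); [|contradiction]. left. f_equal. apply proof_irrelevance.
Qed.

Lemma NoDup_copies m : NoDup (copies m).
Proof.
  unfold copies. apply NoDup_concat_map; auto using seq_NoDup.
  - intros a _. destruct (lt_dec a m); repeat constructor. auto.
  - intros a a' b _ _ Ha Ha'. destruct (lt_dec a m), (lt_dec a' m); simpl in *; try tauto.
    destruct Ha as [<-|[]], Ha' as [Ha'|[]]. injection Ha'. auto.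
Qed.

Definition model_level (m t : nat) : list (model_index m) := map (fun i => (i, t)) (copies m).

Lemma level_enum_model m : level_enum (fun y : model_index m => snd y) (model_level m).
Proof.
  split.
  - intros t. apply Injective_map_NoDup; [intros a b E; injection E; auto | apply NoDup_copies].
  - intros t [i n]. unfold model_level. rewrite in_map_iff. simpl. split.
    + intros [j [E _]]. injection E. auto.
    + intros ->. exists i. auto using in_copies.
Qed.

Lemma sqsum_model_level_S m q g t : 1 <= q ->
  sqsum (direct_sum m (classical_dirichlet q) g) (model_level m (S t))
  = rsum (fun y : model_index m => dweight q (snd y) * Cnorm2 (g y)) (model_level m t).
Proof.
  intros Hq. rewrite sqsum_rsum. unfold model_level. rewrite !rsum_map. apply rsum_ext. intros i.
  unfold direct_sum. simpl. rewrite Cnorm2_mul, Cnorm2_RtoC, sqrt_sqrt; [reflexivity|].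
  left. apply (dweight_pos q t Hq).
Qed.

Lemma model_shift_le m q g s s' t (y : model_index m) : 1 <= q ->
  l2_sqnorm g s -> l2_sqnorm (direct_sum m (classical_dirichlet q) g) s' ->
  (forall y : model_index m, (snd y < t)%nat -> g y = C0) ->
  s' <= dweight q t * s - (dweight q t - dweight q (snd y)) * Cnorm2 (g y).
Proof.
  intros Hq Hs Hs' Hlow.
  refine (proj2 (l2_shift_le (fun y : model_index m => snd y) (model_level m) _ g
                   (fun y => dweight q (snd y)) (dweight q t) s y (level_enum_model m) _ _ Hs _ _ _) s' Hs').
  - rewrite sqsum_rsum. apply rsum_zero. intros z Hz. apply in_map_iff in Hz.
    destruct Hz as [i [<- _]]. apply Cnorm2_C0.
  - intros t'. apply sqsum_model_level_S; auto.
  - left; apply dweight_pos; auto.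
  - intros; left; apply dweight_pos; auto.
  - intros z. destruct (lt_dec (snd z) t).
    + rewrite Hlow, Cnorm2_C0 by auto. lra.
    + apply Rmult_le_compat_r; auto using Cnorm2_nonneg. apply dweight_le; auto; lia.
Qed.

(** * If [q > 1], equivalence forces a single copy and a tree isomorphic to [N] *)

Section Unitary.
Context {X Y : Type} (U : (X -> C) -> (Y -> C)).
Hypothesis HU : is_unitary U.

Lemma unitary_sqnorm f s : l2_sqnorm f s -> l2_sqnorm (U f) s.
Proof. intros Hs. apply HU; eauto using l2_sqnorm_in_l2. Qed.

Lemma unitary_zero y : U (fun _ => C0) y = C0.
Proof.
  destruct HU as (_ & Hl & _). assert (Hz : in_l2 (fun _ : X => C0)) by apply (l2_sqnorm_in_l2 _ _ l2_sqnorm_zero).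
  pose proof (Hl C1 _ _ Hz Hz y) as H. cbv beta in H.
  replace (fun x : X => Cadd (Cmul C1 C0) C0) with (fun _ : X => C0) in H
    by (apply functional_extensionality; intros; rewrite Cmul_C0, Cadd_C0; reflexivity).
  revert H. generalize (U (fun _ => C0) y). intros [a b] H.
  pose proof (f_equal fst H) as H1. pose proof (f_equal snd H) as H2.
  unfold Cadd, Cmul, C1, RtoC in H1, H2. simpl in H1, H2. unfold C0. f_equal; lra.
Qed.

Lemma unitary_scal a f y : in_l2 f -> U (fun x => Cmul a (f x)) y = Cmul a (U f y).
Proof.
  intros Hf. pose proof HU as (_ & Hl & _).
  assert (Hz : in_l2 (fun _ : X => C0)) by apply (l2_sqnorm_in_l2 _ _ l2_sqnorm_zero).
  pose proof (Hl a _ _ Hf Hz y) as H. cbv beta in H.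
  replace (fun x : X => Cadd (Cmul a (f x)) C0) with (fun x : X => Cmul a (f x)) in H
    by (apply functional_extensionality; intros; rewrite Cadd_C0; reflexivity).
  rewrite H, unitary_zero, Cadd_C0. reflexivity.
Qed.

(** Compare the norms of [e_x + z e_x'] and of its image for [z = conj a * (U e_x) p]. *)
Lemma unitary_single_orth x x' p a :
  x <> x' -> (forall y, U (single x' C1) y = single p a y) -> Cnorm2 a = 1 ->
  U (single x C1) p = C0.
Proof.
  intros Hne Hx' Ha. set (g := U (single x C1)). set (z := Cmul (Cconj a) (g p)).
  set (h := fun u => Cadd (Cmul z (single x' C1 u)) (single x C1 u)).
  assert (Hh : h = upd (single x C1) x' z).
  { apply functional_extensionality; intros u. unfold h, upd, single, upd.
    destruct (dec (u = x')), (dec (u = x)); subst; try congruence;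
      destruct z; unfold Cadd, Cmul, C1, RtoC, C0; apply C_ext; simpl; ring. }
  assert (Hn1 : l2_sqnorm (U h) (1 + Cnorm2 z)).
  { apply unitary_sqnorm. rewrite Hh.
    replace (1 + Cnorm2 z) with (Cnorm2 C1 - Cnorm2 (single x C1 x') + Cnorm2 z).
    - apply l2_sqnorm_upd, l2_sqnorm_single.
    - unfold single, upd. destruct (dec (x' = x)); [congruence|]. rewrite Cnorm2_C1, Cnorm2_C0. ring. }
  assert (HUh : U h = upd g p (Cadd (Cmul z a) (g p))).
  { apply functional_extensionality; intros y. pose proof HU as (_ & Hl & _).
    unfold h. rewrite Hl by apply in_l2_single. rewrite Hx'. unfold upd, single, upd. fold g.
    destruct (dec (y = p)); [subst; reflexivity|]. rewrite Cmul_C0. apply Cadd_C0l. }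
  assert (Hn2 : l2_sqnorm (U h) (1 - Cnorm2 (g p) + Cnorm2 (Cadd (Cmul z a) (g p)))).
  { rewrite HUh. apply l2_sqnorm_upd. rewrite <- Cnorm2_C1. apply unitary_sqnorm, l2_sqnorm_single. }
  pose proof (l2_sqnorm_unique _ _ _ Hn1 Hn2) as Heq.
  unfold z in Heq. rewrite Cmul_conj_l, Ha in Heq.
  replace (Cadd (Cmul (RtoC 1) (g p)) (g p)) with (Cmul (RtoC 2) (g p)) in Heq
    by (destruct (g p); unfold Cadd, Cmul, RtoC; apply C_ext; simpl; ring).
  rewrite !Cnorm2_mul, Cnorm2_conj, Ha, Cnorm2_RtoC in Heq.
  apply Cnorm2_le0. lra.
Qed.

End Unitary.

Section Forward.
Context {V : Type} (E : V -> V -> Prop) (root : V).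
Hypotheses (HT : rooted_directed_tree E root) (Hlf : locally_finite E) (Hleaf : leafless E).
Variables (q : R) (lam : V -> R).
Hypotheses (Hq : 1 < q) (Hlam : dirichlet_weights E root q lam).

Let Hq1 : 1 <= q := Rlt_le _ _ Hq.

Lemma model_shift_single_bottom m (i : {i : nat | (i < m)%nat}) :
  direct_sum m (classical_dirichlet q) (single (i, O) C1) = single (i, 1%nat) (RtoC (sqrt q)).
Proof.
  apply functional_extensionality. intros [j [|n]]; unfold direct_sum, single, upd; simpl.
  - destruct (dec ((j, O) = (i, 1%nat))) as [e|]; [discriminate e | reflexivity].
  - destruct (dec ((j, n) = (i, O))) as [e|ne], (dec ((j, S n) = (i, 1%nat))) as [e'|ne'].
    + injection e as -> ->. unfold Cmul, RtoC, C1. apply C_ext; simpl; rewrite Rplus_0_l, Rplus_0_l, Rdiv_1_r; ring.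
    + injection e as -> ->. contradiction.
    + injection e' as -> ->. contradiction.
    + apply Cmul_C0.
Qed.

Lemma shift_single_sqnorm_ge v s :
  l2_sqnorm (weighted_shift E lam (single v C1)) s -> dweight q (dep E root HT v) <= s.
Proof.
  intros Hs. rewrite <- (rsum_children_weight_sq E root HT Hlf Hleaf q lam Hq1 Hlam v).
  eapply Rle_trans; [|apply (sqsum_le_l2_sqnorm _ _ _ Hs (NoDup_children E Hlf v))].
  rewrite sqsum_rsum. apply Req_le, rsum_ext_in. intros u Hu. apply in_children in Hu.
  rewrite (weighted_shift_edge E root HT _ _ v u Hu), Cnorm2_mul, Cnorm2_RtoC.
  unfold single, upd. destruct (dec (v = v)); [|congruence]. rewrite Cnorm2_C1. ring.
Qed.

Section Intertwiner.
Variables (m : nat) (U : (V -> C) -> (model_index m -> C)).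
Hypotheses (HU : is_unitary U)
  (HUS : forall f, in_l2 f -> forall y, U (weighted_shift E lam f) y = direct_sum m (classical_dirichlet q) (U f) y).

(** [e_(i,0)] is stretched by exactly [sqrt q], which on the tree happens only at the root. *)
Lemma preimage_bottom_at_root i f x :
  in_l2 f -> (forall y, U f y = single (i, O) C1 y) -> x <> root -> f x = C0.
Proof.
  intros Hf HUf Hx. destruct (l2_sqnorm_exists f Hf) as [s Hs].
  assert (EUf : U f = single (i, O) C1) by (apply functional_extensionality; auto).
  assert (Hs1 : s = 1).
  { pose proof (unitary_sqnorm U HU f s Hs) as H. rewrite EUf in H.
    rewrite <- Cnorm2_C1. eapply l2_sqnorm_unique; eauto using l2_sqnorm_single. }
  destruct (weighted_shift_l2 E root HT Hlf Hleaf q lam Hq1 Hlam f s Hs) as [HSf Hdef].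
  destruct (l2_sqnorm_exists _ HSf) as [s' Hs'].
  assert (Hs'q : s' = q).
  { pose proof (unitary_sqnorm U HU _ s' Hs') as H.
    replace (U (weighted_shift E lam f)) with (single (i, 1%nat) (RtoC (sqrt q))) in H.
    - rewrite (l2_sqnorm_unique _ _ _ H (l2_sqnorm_single _ _)), Cnorm2_RtoC, sqrt_sqrt; lra.
    - apply functional_extensionality. intros y. rewrite HUS, EUf, model_shift_single_bottom; auto. }
  specialize (Hdef s' x Hs').
  assert (Hdx : (0 < dep E root HT x)%nat).
  { destruct (dep E root HT x) eqn:Ed; [|lia]. exfalso. apply Hx. eapply dep_eq_0; eauto. }
  pose proof (dweight_lt q O (dep E root HT x) Hq Hdx) as Hlt. rewrite dweight_O in Hlt.
  apply Cnorm2_le0. subst. nra.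
Qed.

Lemma at_most_one_copy : (m <= 1)%nat.
Proof.
  destruct (le_lt_dec m 1) as [|H1]; auto. exfalso.
  assert (H0 : (0 < m)%nat) by lia. set (i0 := exist (fun i => (i < m)%nat) O H0).
  set (i1 := exist (fun i => (i < m)%nat) 1%nat H1).
  pose proof HU as (_ & _ & _ & Hsurj).
  destruct (Hsurj (single (i0, O) C1) (in_l2_single _ _)) as [f0 [Hf0 HUf0]].
  destruct (Hsurj (single (i1, O) C1) (in_l2_single _ _)) as [f1 [Hf1 HUf1]].
  assert (Hdep : (fun x => Cmul (f0 root) (f1 x)) = (fun x => Cmul (f1 root) (f0 x))).
  { apply functional_extensionality. intros x. destruct (dec (x = root)) as [->|Hx].
    - destruct (f0 root), (f1 root). unfold Cmul; apply C_ext; simpl; ring.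
    - rewrite (preimage_bottom_at_root i0 f0 x), (preimage_bottom_at_root i1 f1 x), !Cmul_C0; auto. }
  pose proof (unitary_scal U HU (f0 root) f1 (i1, O) Hf1) as Hscal.
  rewrite Hdep, unitary_scal, HUf0, HUf1 in Hscal by auto.
  unfold single, upd in Hscal. destruct (dec ((i1, O) = (i0, O))) as [e|_]; [discriminate e|].
  destruct (dec ((i1, O) = (i1, O))) as [_|]; [|congruence].
  rewrite Cmul_C0 in Hscal.
  assert (Hz : f0 = fun _ => C0).
  { apply functional_extensionality. intros x. destruct (dec (x = root)) as [->|Hx].
    - revert Hscal. unfold C1, RtoC, Cmul. destruct (f0 root). intros Hscal. injection Hscal. intros.
      unfold C0. f_equal; lra.
    - apply (preimage_bottom_at_root i0 f0 x); auto. }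
  pose proof (HUf0 (i0, O)) as Hbot. rewrite Hz, unitary_zero in Hbot by auto.
  unfold single, upd in Hbot. destruct (dec ((i0, O) = (i0, O))); [|congruence].
  apply C1_neq_C0. auto.
Qed.

End Intertwiner.

Definition copy0 : {i : nat | (i < 1)%nat} := exist _ O (Nat.lt_0_succ O).

Lemma copy0_unique (i : {i : nat | (i < 1)%nat}) : i = copy0.
Proof.
  destruct i as [i Hi]. unfold copy0. assert (i = O) by lia. subst. f_equal. apply proof_irrelevance.
Qed.

Section OneCopy.
Variable U : (V -> C) -> (model_index 1 -> C).
Hypotheses (HU : is_unitary U)
  (HUS : forall f, in_l2 f -> forall y, U (weighted_shift E lam f) y = direct_sum 1 (classical_dirichlet q) (U f) y).

(** [S e_v] has squared norm at least [dweight q (dep v)], which the model shift cannot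
    reach if [U e_v] has mass above height [dep v]. *)
Lemma unitary_single_above v :
  (forall y : model_index 1, (snd y < dep E root HT v)%nat -> U (single v C1) y = C0) ->
  forall y : model_index 1, (dep E root HT v < snd y)%nat -> U (single v C1) y = C0.
Proof.
  intros Hlow y Hy. set (g := U (single v C1)).
  assert (Hg : l2_sqnorm g 1) by (rewrite <- Cnorm2_C1; apply unitary_sqnorm, l2_sqnorm_single; auto).
  destruct (weighted_shift_l2 E root HT Hlf Hleaf q lam Hq1 Hlam _ _ (l2_sqnorm_single v C1)) as [HSe _].
  destruct (l2_sqnorm_exists _ HSe) as [s' Hs'].
  assert (HBg : l2_sqnorm (direct_sum 1 (classical_dirichlet q) g) s').
  { replace (direct_sum 1 (classical_dirichlet q) g) with (U (weighted_shift E lam (single v C1))).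
    - apply unitary_sqnorm; auto.
    - apply functional_extensionality; intros y'. apply HUS, in_l2_single. }
  pose proof (shift_single_sqnorm_ge v s' Hs') as Hge.
  pose proof (model_shift_le 1 q g 1 s' (dep E root HT v) y Hq1 Hg HBg Hlow) as Hle.
  pose proof (dweight_lt q _ _ Hq Hy) as Hlt. pose proof (Cnorm2_nonneg (g y)).
  apply Cnorm2_le0. nra.
Qed.

Lemma unitary_single_vertex t : forall v, dep E root HT v = t ->
  exists a, Cnorm2 a = 1 /\ forall y, U (single v C1) y = single (copy0, t) a y.
Proof.
  induction t as [t IH] using lt_wf_ind. intros v Hv. set (g := U (single v C1)).
  assert (Hlow : forall y : model_index 1, (snd y < t)%nat -> g y = C0).
  { intros [i s] Hs. simpl in Hs. rewrite (copy0_unique i).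
    destruct (exists_vertex_of_depth E root HT Hleaf s) as [w Hw].
    destruct (IH s Hs w Hw) as [a [Ha Hwa]].
    apply (unitary_single_orth U HU v w (copy0, s) a); auto. intros ->. lia. }
  assert (Hge : g = single (copy0, t) (g (copy0, t))).
  { apply functional_extensionality. intros [i n]. rewrite (copy0_unique i). unfold single, upd.
    destruct (dec ((copy0, n) = (copy0, t))) as [e|ne]; [injection e as Ent; subst n; reflexivity|].
    destruct (lt_eq_lt_dec n t) as [[Hlt|Heq]|Hgt]; [apply Hlow; auto | subst n; congruence |].
    subst t. apply (unitary_single_above v Hlow (copy0, n)); auto. }
  exists (g (copy0, t)). split.
  - assert (Hg : l2_sqnorm g 1) by (rewrite <- Cnorm2_C1; apply unitary_sqnorm, l2_sqnorm_single; auto).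
    rewrite Hge in Hg. symmetry. eapply l2_sqnorm_unique; eauto using l2_sqnorm_single.
  - intros y. exact (f_equal (fun h => h y) Hge).
Qed.

Lemma dep_injective v v' : dep E root HT v = dep E root HT v' -> v = v'.
Proof.
  intros Hd. destruct (dec (v = v')) as [|Hn]; auto. exfalso.
  destruct (unitary_single_vertex _ v eq_refl) as [a [Ha Hva]].
  destruct (unitary_single_vertex _ v' (eq_sym Hd)) as [a' [Ha' Hva']].
  pose proof (unitary_single_orth U HU v v' _ a' Hn Hva' Ha') as Horth.
  rewrite Hva in Horth. unfold single, upd in Horth. destruct (dec _) as [_|]; [|congruence].
  subst a. rewrite Cnorm2_C0 in Ha. lra.
Qed.

End OneCopy.

Theorem iso_to_nat_of_equivalence :
  (exists m : nat, (1 <= m)%nat /\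
     unitarily_equivalent (weighted_shift E lam) (direct_sum m (classical_dirichlet q))) ->
  iso_to_nat E.
Proof.
  intros [m [Hm [U [HU HUS]]]].
  assert (m = 1%nat) by (pose proof (at_most_one_copy m U HU HUS); lia). subst m.
  exists (dep E root HT). split; [|split].
  - exact (dep_injective U HU HUS).
  - apply exists_vertex_of_depth; auto.
  - intros u v. split; [apply dep_edge; auto|]. intros H.
    destruct (dep_eq_S E root HT v _ H) as [w [Ew Hw]].
    rewrite (dep_injective U HU HUS w u Hw) in Ew. exact Ew.
Qed.

End Forward.

(** * Trees isomorphic to [N] *)

Section PathTree.
Context {V : Type} (E : V -> V -> Prop) (root : V).
Hypotheses (HT : rooted_directed_tree E root) (Hlf : locally_finite E) (Hleaf : leafless E).
Variables (q : R) (lam : V -> R).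
Hypothesis Hlam : dirichlet_weights E root q lam.
Variable phi : V -> nat.
Hypotheses (Hinj : forall u v, phi u = phi v -> u = v) (Hsurj : forall n, exists v, phi v = n)
  (Hedge : forall u v, E u v <-> phi v = S (phi u)).

Lemma dep_path v : dep E root HT v = phi v.
Proof.
  assert (Hroot : phi root = O).
  { destruct (phi root) as [|n] eqn:Hr; auto. destruct (Hsurj n) as [w Hw].
    exfalso. apply (no_parent_root E root HT w), Hedge. congruence. }
  pose proof (dep_spec E root HT v) as Hd. induction Hd as [|v u n _ IH Hvu]; auto.
  apply Hedge in Hvu. congruence.
Qed.

Definition vertex_at (n : nat) : V := proj1_sig (constructive_indefinite_description _ (Hsurj n)).

Lemma phi_vertex_at n : phi (vertex_at n) = n.
Proof. unfold vertex_at. destruct (constructive_indefinite_description _ _). assumption. Qed.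

Lemma in_level_path x t : In x (level E root Hlf t) <-> x = vertex_at t.
Proof.
  rewrite (in_level E root HT Hlf), dep_path. split.
  - intros <-. apply Hinj. rewrite phi_vertex_at. reflexivity.
  - intros ->. apply phi_vertex_at.
Qed.

Lemma rsum_level_path (F : V -> R) t : rsum F (level E root Hlf t) = F (vertex_at t).
Proof.
  rewrite (rsum_same F _ (vertex_at t :: nil)).
  - simpl. ring.
  - apply level_enum_dep; auto.
  - repeat constructor. auto.
  - intros x. rewrite in_level_path. simpl. intuition.
Qed.

Lemma edge_vertex_at k : E (vertex_at k) (vertex_at (S k)).
Proof. apply Hedge. rewrite !phi_vertex_at. reflexivity. Qed.

Lemma length_children_path v : length (children E Hlf v) = 1%nat.
Proof.
  assert (Hc : forall u, In u (children E Hlf v) -> u = vertex_at (S (phi v))).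
  { intros u Hu. apply in_children, Hedge in Hu. apply Hinj. rewrite Hu, phi_vertex_at. reflexivity. }
  pose proof (NoDup_children E Hlf v) as Hn. pose proof (length_children_pos E Hlf v Hleaf).
  destruct (children E Hlf v) as [|a [|b l]]; simpl in *; try lia.
  inversion Hn as [|? ? Hna]. exfalso. apply Hna. left. rewrite (Hc a), (Hc b); auto.
Qed.

Definition path_levels (t : nat) : list (model_index 1) := (copy0, t) :: nil.

Lemma level_enum_path_levels : level_enum (fun y : model_index 1 => snd y) path_levels.
Proof.
  split; [intros; repeat constructor; auto|]. intros t [i n]. unfold path_levels. simpl.
  rewrite (copy0_unique i). split; [intros [H|[]]; injection H; auto | intros ->; auto].
Qed.

Theorem equivalence_of_path :
  unitarily_equivalent (weighted_shift E lam) (direct_sum 1 (classical_dirichlet q)).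
Proof.
  set (K := fun (_ : model_index 1) (_ : V) => 1).
  exists (level_op (level E root Hlf) (fun y : model_index 1 => snd y) K). split.
  - apply (level_op_unitary (dep E root HT) _ _ path_levels); auto using level_enum_dep, level_enum_path_levels.
    + intros t x x' Hx Hx'. apply in_level_path in Hx, Hx'. subst. rewrite delta_refl.
      unfold K, rsum; simpl. ring.
    + intros t y y' [<-|[]] [<-|[]]. rewrite delta_refl, rsum_level_path. unfold K. ring.
  - intros f _ [i [|k]]; unfold level_op, kernel_apply, direct_sum, classical_dirichlet, K; cbn [fst snd];
      rewrite !rsum_level_path.
    + replace (vertex_at O) with root.
      * rewrite weighted_shift_root by auto. unfold C0. apply C_ext; cbn [fst snd]; ring.
      * symmetry. apply (dep_eq_0 E root HT). rewrite dep_path, phi_vertex_at. reflexivity.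
    + rewrite (weighted_shift_edge E root HT lam f _ _ (edge_vertex_at k)).
      rewrite (dirichlet_weight_edge E root HT Hlf q lam Hlam _ _ (edge_vertex_at k)).
      rewrite length_children_path, dep_path, phi_vertex_at. change (INR 1) with 1.
      rewrite sqrt_1, Rinv_1, Rmult_1_l, !Cmul_RtoC.
      unfold dweight. apply C_ext; cbn [fst snd]; ring.
Qed.

End PathTree.

(** * Helmert matrices *)

(* Row [j >= 1] of the Helmert matrix: [j] equal entries followed by [-j] times that
   entry, normalised; together with the constant row [0] they form an orthogonal matrix. *)
Definition helmert_scale (j : nat) : R := / sqrt (INR j * (INR j + 1)).

Definition helmert (j a : nat) : R :=
  if lt_dec a j then helmert_scale j else if Nat.eq_dec a j then - INR j * helmert_scale j else 0.

Lemma helmert_scale_sq j : (1 <= j)%nat -> helmert_scale j * helmert_scale j = / (INR j * (INR j + 1)).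
Proof.
  intros Hj. unfold helmert_scale. assert (0 < INR j) by (apply lt_0_INR; lia).
  rewrite <- Rinv_mult, sqrt_sqrt; nra.
Qed.

Lemma helmert_lt j a : (a < j)%nat -> helmert j a = helmert_scale j.
Proof. intros. unfold helmert. destruct (lt_dec a j); [reflexivity | lia]. Qed.

Lemma helmert_diag j : helmert j j = - INR j * helmert_scale j.
Proof. unfold helmert. destruct (lt_dec j j); [lia|]. destruct (Nat.eq_dec j j); [reflexivity | lia]. Qed.

Lemma helmert_gt j a : (j < a)%nat -> helmert j a = 0.
Proof. intros. unfold helmert. destruct (lt_dec a j); [lia|]. destruct (Nat.eq_dec a j); [lia | reflexivity]. Qed.

Lemma rsum_seq_S (F : nat -> R) s n : rsum F (seq s (S n)) = rsum F (seq s n) + F (s + n)%nat.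
Proof. rewrite seq_S, rsum_app. unfold rsum at 2; simpl. lra. Qed.

Lemma rsum_seq_trunc (F : nat -> R) j k : (j < k)%nat -> (forall a, (j < a)%nat -> F a = 0) ->
  rsum F (seq 0 k) = rsum F (seq 0 (S j)).
Proof.
  intros Hjk HF. replace k with (S j + (k - S j))%nat by lia. rewrite seq_app, rsum_app.
  rewrite (rsum_zero F (seq (0 + S j) _)); [lra|]. intros a Ha. apply in_seq in Ha. apply HF. lia.
Qed.

Lemma helmert_sum j k : (1 <= j)%nat -> (j < k)%nat -> rsum (helmert j) (seq 0 k) = 0.
Proof.
  intros H1 H2. rewrite (rsum_seq_trunc _ j k), rsum_seq_S, helmert_diag by auto using helmert_gt.
  rewrite (rsum_ext_in _ (fun _ => helmert_scale j)), rsum_const, length_seq; [simpl; ring|].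
  intros a Ha. apply in_seq in Ha. apply helmert_lt. lia.
Qed.

Lemma helmert_orthonormal j j' k : (1 <= j)%nat -> (j < k)%nat -> (1 <= j')%nat -> (j' < k)%nat ->
  rsum (fun a => helmert j a * helmert j' a) (seq 0 k) = delta j j'.
Proof.
  assert (Hlt : forall j j', (1 <= j)%nat -> (j < j')%nat -> (j' < k)%nat ->
            rsum (fun a => helmert j a * helmert j' a) (seq 0 k) = 0).
  { intros i i' H1 H2 H3. rewrite (rsum_ext _ (fun a => helmert_scale i' * helmert i a)).
    - rewrite rsum_scal_l, helmert_sum; [ring | lia | lia].
    - intros a. destruct (lt_dec a i') as [Ha|Ha].
      + rewrite (helmert_lt i' a Ha). ring.
      + rewrite (helmert_gt i a) by lia. ring. }
  intros H1 H2 H3 H4. destruct (Nat.lt_total j j') as [Hjj|[<-|Hjj]].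
  - rewrite delta_neq by lia. auto.
  - rewrite delta_refl, (rsum_seq_trunc _ j k), rsum_seq_S; auto.
    2: { intros a Ha. rewrite helmert_gt by lia. ring. }
    rewrite (rsum_ext_in _ (fun _ => helmert_scale j * helmert_scale j)).
    + rewrite rsum_const, length_seq, helmert_diag. simpl.
      replace (INR j * (helmert_scale j * helmert_scale j) + - INR j * helmert_scale j * (- INR j * helmert_scale j))
        with (INR j * (INR j + 1) * (helmert_scale j * helmert_scale j)) by ring.
      rewrite helmert_scale_sq by auto. assert (0 < INR j) by (apply lt_0_INR; lia). field. lra.
    + intros a Ha. apply in_seq in Ha. rewrite helmert_lt by lia. reflexivity.
  - rewrite delta_neq by lia. rewrite (rsum_ext _ (fun a => helmert j' a * helmert j a)) by (intros; ring).
    apply Hlt; lia.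
Qed.

(** The term [/ INR (S k)] is the contribution of the constant row [0]. *)
Lemma helmert_complete k : forall a b, (a <= k)%nat -> (b <= k)%nat ->
  / INR (S k) + rsum (fun j => helmert j a * helmert j b) (seq 1 k) = delta a b.
Proof.
  induction k as [|k IH]; intros a b Ha Hb.
  - replace a with O by lia. replace b with O by lia. rewrite delta_refl. unfold rsum; simpl. field.
  - rewrite rsum_seq_S. replace (1 + k)%nat with (S k) by lia.
    assert (0 < INR (S k)) by (apply lt_0_INR; lia).
    assert (Hs : INR (S (S k)) = INR (S k) + 1) by apply S_INR.
    pose proof (helmert_scale_sq (S k) ltac:(lia)) as Hh.
    assert (Hhigh : forall c, (c <= S k)%nat ->
              rsum (fun j => helmert j (S k) * helmert j c) (seq 1 k) = 0).
    { intros c Hc. apply rsum_zero. intros j Hj. apply in_seq in Hj. rewrite helmert_gt; [ring | lia]. }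
    destruct (Nat.eq_dec a (S k)) as [->|Hak], (Nat.eq_dec b (S k)) as [->|Hbk].
    + rewrite delta_refl, Hhigh, helmert_diag, Hs by lia.
      replace (- INR (S k) * helmert_scale (S k) * (- INR (S k) * helmert_scale (S k)))
        with (INR (S k) * INR (S k) * (helmert_scale (S k) * helmert_scale (S k))) by ring.
      rewrite Hh. field. lra.
    + rewrite delta_neq, Hhigh, helmert_diag, helmert_lt, Hs by lia.
      replace (- INR (S k) * helmert_scale (S k) * helmert_scale (S k))
        with (- INR (S k) * (helmert_scale (S k) * helmert_scale (S k))) by ring.
      rewrite Hh. field. lra.
    + rewrite delta_neq by lia.
      rewrite (rsum_ext _ (fun j => helmert j (S k) * helmert j a)), Hhigh by (auto; intros; ring).
      rewrite helmert_diag, helmert_lt, Hs by lia.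
      replace (helmert_scale (S k) * (- INR (S k) * helmert_scale (S k)))
        with (- INR (S k) * (helmert_scale (S k) * helmert_scale (S k))) by ring.
      rewrite Hh. field. lra.
    + specialize (IH a b ltac:(lia) ltac:(lia)).
      rewrite (helmert_lt (S k) a), (helmert_lt (S k) b), Hh, Hs by lia.
      replace (rsum (fun j => helmert j a * helmert j b) (seq 1 k)) with (delta a b - / INR (S k)) by lra.
      field. lra.
Qed.

(** * The case [q = 1]: a Wold decomposition of the isometric shift *)

Fixpoint position {X : Type} (x : X) (l : list X) : nat :=
  match l with
  | nil => O
  | y :: r => if dec (x = y) then O else S (position x r)
  end.

Lemma position_lt {X} (x : X) l : In x l -> (position x l < length l)%nat.
Proof.
  induction l as [|a l IH]; simpl; intros H; [contradiction|].
  destruct (dec (x = a)); [lia|]. destruct H as [->|H]; [congruence|]. specialize (IH H). lia.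
Qed.

Lemma position_inj {X} (x x' : X) l : In x l -> In x' l -> position x l = position x' l -> x = x'.
Proof.
  induction l as [|a l IH]; simpl; intros H H' E; [contradiction|].
  destruct (dec (x = a)), (dec (x' = a)); subst; auto; try discriminate.
  destruct H as [->|H]; [congruence|]. destruct H' as [->|H']; [congruence|].
  injection E. auto.
Qed.

Lemma rsum_position {X} (F : nat -> R) (l : list X) :
  NoDup l -> rsum (fun x => F (position x l)) l = rsum F (seq 0 (length l)).
Proof.
  revert F. induction l as [|a l IH]; intros F Hn; [reflexivity|]. inversion Hn as [|? ? Ha Hl]; subst.
  rewrite length_cons, <- cons_seq, !rsum_cons, <- seq_shift, rsum_map, <- (IH (fun i => F (S i)) Hl).
  simpl. destruct (dec (a = a)); [|congruence]. f_equal. apply rsum_ext_in. intros x Hx.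
  destruct (dec (x = a)); [subst; contradiction | reflexivity].
Qed.

Section IsometricShift.
Context {V : Type} (E : V -> V -> Prop) (root : V).
Hypotheses (HT : rooted_directed_tree E root) (Hlf : locally_finite E) (Hleaf : leafless E).
Variable lam : V -> R.
Hypothesis Hlam : dirichlet_weights E root 1 lam.

Local Notation Chi := (children E Hlf).
Local Notation Lev := (level E root Hlf).
Local Notation depv := (dep E root HT).

Lemma weight_edge v u : E v u -> lam u = / sqrt (INR (length (Chi v))).
Proof. intros H. rewrite (dirichlet_weight_edge E root HT Hlf 1 lam Hlam v u H), dweight_1, sqrt_1. ring. Qed.

Lemma rsum_children_weight_sq_1 v : rsum (fun u => lam u * lam u) (Chi v) = 1.
Proof. rewrite (rsum_children_weight_sq E root HT Hlf Hleaf 1 lam); auto using dweight_1; lra. Qed.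

Definition real_shift (h : V -> R) (x : V) : R :=
  match parent E x with Some v => lam x * h v | None => 0 end.

Lemma real_shift_edge h v x : E v x -> real_shift h x = lam x * h v.
Proof. intros H. unfold real_shift. rewrite (parent_of_edge E root HT v x H). reflexivity. Qed.

Lemma weighted_shift_pair f x :
  weighted_shift E lam f x = (real_shift (fun v => fst (f v)) x, real_shift (fun v => snd (f v)) x).
Proof.
  unfold weighted_shift, real_shift. destruct (parent E x); [apply Cmul_RtoC | reflexivity].
Qed.

Definition inner (t : nat) (a b : V -> R) : R := rsum (fun x => a x * b x) (Lev t).

Lemma inner_comm t a b : inner t a b = inner t b a.
Proof. apply rsum_ext. intros; ring. Qed.

Lemma inner_real_shift t a b : inner (S t) (real_shift a) (real_shift b) = inner t a b.
Proof.
  unfold inner. rewrite rsum_level_S. apply rsum_ext. intros v.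
  rewrite (rsum_ext_in _ (fun u => (lam u * lam u) * (a v * b v))), rsum_scal_r, rsum_children_weight_sq_1.
  - ring.
  - intros u Hu. apply in_children in Hu. rewrite !(real_shift_edge _ v u Hu). ring.
Qed.

Definition helmert_vec (v : V) (j : nat) (x : V) : R :=
  if dec (In x (Chi v)) then helmert j (position x (Chi v)) else 0.

Lemma helmert_vec_out v j x : ~ In x (Chi v) -> helmert_vec v j x = 0.
Proof. intros H. unfold helmert_vec. destruct (dec _); tauto. Qed.

Lemma helmert_vec_in v j x : In x (Chi v) -> helmert_vec v j x = helmert j (position x (Chi v)).
Proof. intros H. unfold helmert_vec. destruct (dec _); tauto. Qed.

Lemma inner_helmert_vec_const t v j (c : V -> R) c0 :
  depv v = t -> (1 <= j < length (Chi v))%nat -> (forall x, In x (Chi v) -> c x = c0) ->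
  inner (S t) c (helmert_vec v j) = 0.
Proof.
  intros Hv Hj Hc. unfold inner. rewrite (rsum_level_S_children E root HT Hlf _ t v Hv).
  - rewrite (rsum_ext_in _ (fun x => c0 * helmert j (position x (Chi v)))).
    + rewrite rsum_scal_l, (rsum_position (helmert j)), helmert_sum by (auto using NoDup_children; lia). ring.
    + intros x Hx. rewrite Hc, helmert_vec_in; auto.
  - intros x Hx. rewrite helmert_vec_out; auto. ring.
Qed.

(** Shifted vectors are constant on each set of siblings, hence orthogonal to the Helmert vectors. *)
Lemma inner_real_shift_helmert_vec t a w j :
  depv w = t -> (1 <= j < length (Chi w))%nat -> inner (S t) (real_shift a) (helmert_vec w j) = 0.
Proof.
  intros Hw Hj. apply (inner_helmert_vec_const t w j _ (/ sqrt (INR (length (Chi w))) * a w)); auto.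
  intros x Hx. apply in_children in Hx. rewrite (real_shift_edge _ w x Hx), (weight_edge w x Hx). reflexivity.
Qed.

Lemma inner_helmert_vec t v j w j' :
  depv v = t -> depv w = t -> (1 <= j < length (Chi v))%nat -> (1 <= j' < length (Chi w))%nat ->
  inner (S t) (helmert_vec v j) (helmert_vec w j') = delta (v, j) (w, j').
Proof.
  intros Hv Hw Hj Hj'. unfold inner. destruct (dec (v = w)) as [<-|Hvw].
  - rewrite (rsum_level_S_children E root HT Hlf _ t v Hv).
    + rewrite (rsum_ext_in _ (fun x => helmert j (position x (Chi v)) * helmert j' (position x (Chi v))))
        by (intros x Hx; rewrite !helmert_vec_in; auto).
      rewrite (rsum_position (fun a => helmert j a * helmert j' a)), helmert_orthonormal
        by (auto using NoDup_children; lia).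
      unfold delta. destruct (dec (j = j')), (dec ((v, j) = (v, j'))); congruence.
    + intros x Hx. rewrite helmert_vec_out; auto. ring.
  - rewrite delta_neq by congruence. apply rsum_zero. intros x _. unfold helmert_vec.
    destruct (dec (In x (Chi v))) as [H1|], (dec (In x (Chi w))) as [H2|]; try ring.
    apply in_children in H1, H2. exfalso. apply Hvw. eapply parent_unique; eauto.
Qed.

(* Labels of the wandering vectors: [None] is [e_root], born at depth 0; [Some (v, j)] is
   row [j] of the Helmert matrix on [Chi v], born at depth [dep v + 1]. *)
Definition label : Type := option (V * nat).

Definition valid_label (l : label) : Prop :=
  match l with None => True | Some (v, j) => (1 <= j < length (Chi v))%nat end.

Definition birth (l : label) : nat := match l with None => O | Some (v, _) => S (depv v) end.

Definition generator (l : label) : V -> R :=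
  match l with
  | None => fun x => if dec (x = root) then 1 else 0
  | Some (v, j) => helmert_vec v j
  end.

Definition basis (t : nat) (l : label) : V -> R := Nat.iter (t - birth l) real_shift (generator l).

Lemma basis_succ t l : (birth l <= t)%nat -> basis (S t) l = real_shift (basis t l).
Proof. intros H. unfold basis. replace (S t - birth l)%nat with (S (t - birth l)) by lia. reflexivity. Qed.

Lemma basis_birth t l : birth l = t -> basis t l = generator l.
Proof. intros <-. unfold basis. rewrite Nat.sub_diag. reflexivity. Qed.

Lemma inner_basis_new_old t l w j :
  valid_label l -> (birth l <= t)%nat -> depv w = t -> (1 <= j < length (Chi w))%nat ->
  inner (S t) (basis (S t) l) (helmert_vec w j) = 0.
Proof. intros Hl Hb Hw Hj. rewrite basis_succ by auto. apply inner_real_shift_helmert_vec; auto. Qed.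

Lemma inner_basis t : forall l l', valid_label l -> valid_label l' ->
  (birth l <= t)%nat -> (birth l' <= t)%nat -> inner t (basis t l) (basis t l') = delta l l'.
Proof.
  induction t as [|t IH]; intros l l' Hl Hl' Hb Hb'.
  - destruct l as [[v j]|]; [simpl in Hb; lia|]. destruct l' as [[v' j']|]; [simpl in Hb'; lia|].
    rewrite delta_refl. unfold inner, basis. simpl. destruct (dec (root = root)); [|congruence].
    unfold rsum; simpl. ring.
  - destruct (Nat.eq_dec (birth l) (S t)) as [E1|E1], (Nat.eq_dec (birth l') (S t)) as [E2|E2].
    + destruct l as [[v j]|]; [|discriminate]. destruct l' as [[w j']|]; [|discriminate].
      rewrite !basis_birth by auto. simpl in E1, E2 |- *.
      rewrite inner_helmert_vec by (auto; lia).
      unfold delta. repeat destruct (dec _); congruence.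
    + destruct l as [[v j]|]; [|discriminate].
      rewrite inner_comm, (basis_birth _ _ E1), delta_neq by (intros <-; contradiction).
      simpl in E1. apply inner_basis_new_old; auto; lia.
    + destruct l' as [[w j']|]; [|discriminate].
      rewrite (basis_birth _ _ E2), delta_neq by (intros ->; contradiction).
      simpl in E2. apply inner_basis_new_old; auto; lia.
    + rewrite !basis_succ, inner_real_shift by lia. apply IH; auto; lia.
Qed.

Definition helmert_gram (w x x' : V) : R :=
  rsum (fun j => helmert_vec w j x * helmert_vec w j x') (seq 1 (length (Chi w) - 1)).

Lemma helmert_gram_out w x x' : ~ (E w x /\ E w x') -> helmert_gram w x x' = 0.
Proof.
  intros H. apply rsum_zero. intros j _. unfold helmert_vec.
  destruct (dec (In x (Chi w))) as [H1|], (dec (In x' (Chi w))) as [H2|]; try ring.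
  apply in_children in H1, H2. tauto.
Qed.

Lemma helmert_gram_children v x x' :
  E v x -> E v x' -> / INR (length (Chi v)) + helmert_gram v x x' = delta x x'.
Proof.
  intros Hx Hx'. apply (in_children E Hlf) in Hx, Hx'.
  pose proof (length_children_pos E Hlf v Hleaf) as Hk.
  pose proof (position_lt x _ Hx). pose proof (position_lt x' _ Hx').
  unfold helmert_gram. rewrite (rsum_ext _ (fun j => helmert j (position x (Chi v)) * helmert j (position x' (Chi v))))
    by (intros j; rewrite !helmert_vec_in; auto).
  replace (length (Chi v)) with (S (length (Chi v) - 1)) at 1 by lia.
  rewrite helmert_complete by lia. unfold delta.
  destruct (dec (position x (Chi v) = position x' (Chi v))) as [Ep|Ep], (dec (x = x')) as [<-|Ex];
    auto; [exfalso; eauto using position_inj | congruence].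
Qed.

Definition new_labels (t : nat) : list label :=
  concat (map (fun v => map (fun j => Some (v, j)) (seq 1 (length (Chi v) - 1))) (Lev t)).

Lemma in_new_labels t l : In l (new_labels t) <-> valid_label l /\ birth l = S t.
Proof.
  unfold new_labels. rewrite in_concat_map. split.
  - intros [v [Hv Hl]]. apply in_map_iff in Hl. destruct Hl as [j [<- Hj]]. apply in_seq in Hj.
    apply (in_level E root HT Hlf) in Hv. simpl. split; [lia | congruence].
  - destruct l as [[v j]|]; simpl; [|lia]. intros [Hj Hv]. exists v. split.
    + apply (in_level E root HT Hlf). lia.
    + apply in_map_iff. exists j. split; auto. apply in_seq. lia.
Qed.

Lemma NoDup_new_labels t : NoDup (new_labels t).
Proof.
  unfold new_labels. apply NoDup_concat_map.
  - apply level_enum_dep; auto.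
  - intros v _. apply Injective_map_NoDup; [intros a b Hab; injection Hab; auto | apply seq_NoDup].
  - intros a a' b _ _ Ha Ha'. apply in_map_iff in Ha, Ha'.
    destruct Ha as [j [<- _]], Ha' as [j' [Hb _]]. injection Hb. auto.
Qed.

Lemma rsum_new_labels t x x' :
  rsum (fun l => basis (S t) l x * basis (S t) l x') (new_labels t) = rsum (fun w => helmert_gram w x x') (Lev t).
Proof.
  unfold new_labels. rewrite rsum_concat_map. apply rsum_ext_in. intros w Hw.
  apply (in_level E root HT Hlf) in Hw. rewrite rsum_map. apply rsum_ext. intros j.
  rewrite basis_birth by (simpl; congruence). reflexivity.
Qed.

Lemma level_parent t x : In x (Lev (S t)) -> exists v, In v (Lev t) /\ E v x.
Proof.
  intros Hx. apply (in_level E root HT Hlf) in Hx. destruct (dep_eq_S E root HT x t Hx) as [v [Ev Hv]].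
  exists v. split; auto. apply (in_level E root HT Hlf). auto.
Qed.

Lemma rsum_basis_succ t L x x' px px' :
  E px x -> E px' x' -> (forall l, In l L -> (birth l <= t)%nat) ->
  rsum (fun l => basis (S t) l x * basis (S t) l x') L
  = lam x * lam x' * rsum (fun l => basis t l px * basis t l px') L.
Proof.
  intros Ex Ex' HL. rewrite <- rsum_scal_l. apply rsum_ext_in. intros l Hl.
  rewrite !basis_succ, (real_shift_edge _ px x), (real_shift_edge _ px' x') by auto. ring.
Qed.

Lemma basis_complete t : forall L, NoDup L -> (forall l, In l L <-> valid_label l /\ (birth l <= t)%nat) ->
  forall x x', In x (Lev t) -> In x' (Lev t) -> rsum (fun l => basis t l x * basis t l x') L = delta x x'.
Proof.
  induction t as [|t IH]; intros L HL HLv x x' Hx Hx'.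
  - destruct Hx as [Hx|[]], Hx' as [Hx'|[]]. subst x x'. rewrite delta_refl, (rsum_same _ L ((None : label) :: nil)); auto.
    + unfold rsum, basis. simpl. destruct (dec (root = root)); [ring | congruence].
    + repeat constructor. auto.
    + intros l. rewrite HLv. destruct l as [[v j]|]; simpl.
      * split; [lia | intros [H|[]]; discriminate].
      * split; [left; reflexivity | split; auto].
  - destruct (level_parent t x Hx) as [px [Hpx Epx]], (level_parent t x' Hx') as [px' [Hpx' Epx']].
    rewrite (rsum_filter_split _ (fun l => Nat.leb (birth l) t)).
    assert (Hold : rsum (fun l => basis (S t) l x * basis (S t) l x') (filter (fun l => Nat.leb (birth l) t) L)
                   = lam x * lam x' * delta px px').
    { rewrite rsum_basis_succ with (px := px) (px' := px') by (auto; intros l Hl; apply filter_In, proj2, Nat.leb_le in Hl; auto).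
      rewrite (IH _ (NoDup_filter _ HL)); auto. intros l. rewrite filter_In, HLv, Nat.leb_le. intuition lia. }
    assert (Hnew : rsum (fun l => basis (S t) l x * basis (S t) l x') (filter (fun l => negb (Nat.leb (birth l) t)) L)
                   = rsum (fun w => helmert_gram w x x') (Lev t)).
    { rewrite <- rsum_new_labels. apply rsum_same; auto using NoDup_filter, NoDup_new_labels.
      intros l. rewrite filter_In, HLv, in_new_labels, Bool.negb_true_iff, Nat.leb_gt. intuition lia. }
    rewrite Hold, Hnew. destruct (dec (px = px')) as [<-|Hne].
    + rewrite delta_refl, (rsum_incl_eq _ (px :: nil)).
      * rewrite rsum_cons, (weight_edge px x), (weight_edge px x') by auto.
        rewrite <- (helmert_gram_children px x x') by auto. unfold rsum; simpl.
        assert (0 < INR (length (Chi px))) by (apply lt_0_INR, length_children_pos; auto).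
        rewrite <- Rinv_mult, sqrt_sqrt by lra. ring.
      * repeat constructor. auto.
      * apply level_enum_dep; auto.
      * intros z [<-|[]]. auto.
      * intros w _ Hw. apply helmert_gram_out. intros [Hwx _]. apply Hw. left.
        exact (parent_unique E root HT px w x Epx Hwx).
    + rewrite delta_neq, rsum_zero, delta_neq; auto; [ring| |].
      * intros <-. exact (Hne (parent_unique E root HT px px' x Epx Epx')).
      * intros w _. apply helmert_gram_out. intros [Hwx Hwx']. apply Hne.
        rewrite (parent_unique E root HT px w x Epx Hwx). exact (parent_unique E root HT w px' x' Hwx' Epx').
Qed.

Lemma valid_labels_finite :
  finite_branching_index E root -> exists G, NoDup G /\ forall l, In l G <-> valid_label l.
Proof.
  intros [N HN]. exists (None :: concat (map new_labels (seq 0 (S N)))). split.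
  - constructor.
    + intros Hin. apply in_concat_map in Hin. destruct Hin as [t [_ Ht]].
      apply in_new_labels in Ht. discriminate (proj2 Ht).
    + apply NoDup_concat_map; auto using seq_NoDup, NoDup_new_labels.
      intros a a' b _ _ Ha Ha'. apply in_new_labels in Ha, Ha'. lia.
  - intros l. split.
    + intros [<-|Hin]; [exact I|]. apply in_concat_map in Hin. destruct Hin as [t [_ Ht]].
      apply in_new_labels in Ht. apply Ht.
    + destruct l as [[v j]|]; intros Hl; [right | left; reflexivity]. apply in_concat_map.
      exists (depv v). split.
      * apply in_seq. split; [lia|]. simpl.
        enough (depv v <= N)%nat by lia. apply (HN v); [|apply dep_spec].
        exists (length (Chi v)). split; [apply chi_card_children | simpl in Hl; lia].
      * apply in_new_labels. split; auto.
Qed.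

Section Copies.
Variable G : list label.
Hypotheses (HG : NoDup G) (HGv : forall l, In l G <-> valid_label l).

Local Notation m := (length G).

Definition copy_label (i : {i : nat | (i < m)%nat}) : label := nth (proj1_sig i) G None.

Lemma copy_label_inj i i' : copy_label i = copy_label i' -> i = i'.
Proof.
  destruct i as [i Hi], i' as [i' Hi']. unfold copy_label. simpl. intros Heq.
  assert (i = i') as <- by (eapply NoDup_nth; eauto). f_equal. apply proof_irrelevance.
Qed.

Lemma valid_copy_label i : valid_label (copy_label i).
Proof. apply HGv, nth_In, proj2_sig. Qed.

Lemma copy_label_surj l : valid_label l -> exists i, copy_label i = l.
Proof.
  intros Hl. apply HGv, (In_nth _ _ None) in Hl. destruct Hl as [n [Hn Hnth]].
  exists (exist _ n Hn). exact Hnth.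
Qed.

Definition copy_height (y : model_index m) : nat := (birth (copy_label (fst y)) + snd y)%nat.

Definition copy_level (t : nat) : list (model_index m) :=
  map (fun i => (i, t - birth (copy_label i))%nat)
      (filter (fun i => Nat.leb (birth (copy_label i)) t) (copies m)).

Lemma in_copy_level t i n : In (i, n) (copy_level t) <-> copy_height (i, n) = t.
Proof.
  unfold copy_level, copy_height. rewrite in_map_iff. simpl. split.
  - intros [i' [Hy Hi']]. injection Hy as <- <-. apply filter_In, proj2, Nat.leb_le in Hi'. lia.
  - intros Ht. exists i. split; [f_equal; lia|]. apply filter_In. split; [apply in_copies | apply Nat.leb_le; lia].
Qed.

Lemma level_enum_copy_level : level_enum copy_height copy_level.
Proof.
  split; [|intros t [i n]; apply in_copy_level]. intros t. apply Injective_map_NoDup_in.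
  - intros i i' _ _ Hy. injection Hy. auto.
  - apply NoDup_filter, NoDup_copies.
Qed.

Definition copy_kernel (y : model_index m) : V -> R := basis (copy_height y) (copy_label (fst y)).

Lemma copy_kernel_columns : orthonormal_columns Lev copy_level copy_kernel.
Proof.
  intros t x x' Hx Hx'. apply (in_level E root HT Hlf) in Hx, Hx'.
  unfold copy_level. rewrite rsum_map.
  rewrite (rsum_ext_in _ (fun i => basis t (copy_label i) x * basis t (copy_label i) x')).
  - rewrite <- (rsum_map (fun l => basis t l x * basis t l x') copy_label).
    apply basis_complete; try apply (in_level E root HT Hlf); auto.
    + apply Injective_map_NoDup; [intros i i'; apply copy_label_inj | apply NoDup_filter, NoDup_copies].
    + intros l. rewrite in_map_iff. split.
      * intros [i [<- Hi]]. apply filter_In, proj2, Nat.leb_le in Hi. auto using valid_copy_label.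
      * intros [Hl Hb]. destruct (copy_label_surj l Hl) as [i <-]. exists i.
        split; auto. apply filter_In. split; [apply in_copies | apply Nat.leb_le; auto].
  - intros i Hi. apply filter_In, proj2, Nat.leb_le in Hi. unfold copy_kernel, copy_height. simpl.
    replace (birth (copy_label i) + (t - birth (copy_label i)))%nat with t by lia. reflexivity.
Qed.

Lemma copy_kernel_rows : orthonormal_columns copy_level Lev (fun x y => copy_kernel y x).
Proof.
  intros t [i n] [i' n'] Hy Hy'. apply in_copy_level in Hy, Hy'. unfold copy_height in Hy, Hy'. simpl in Hy, Hy'.
  unfold copy_kernel, copy_height. simpl. rewrite Hy, Hy'.
  change (inner t (basis t (copy_label i)) (basis t (copy_label i')) = delta (i, n) (i', n')).
  rewrite inner_basis by (auto using valid_copy_label; lia). unfold delta.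
  destruct (dec (copy_label i = copy_label i')) as [Hl|Hl], (dec ((i, n) = (i', n'))) as [Hp|Hp]; auto.
  - apply copy_label_inj in Hl. subst i'. exfalso. apply Hp. f_equal. lia.
  - injection Hp as ->. contradiction.
Qed.

Lemma kernel_apply_real_shift_bottom i a :
  kernel_apply Lev copy_height copy_kernel (real_shift a) (i, O) = 0.
Proof.
  unfold kernel_apply, copy_kernel, copy_height. simpl. rewrite Nat.add_0_r, basis_birth by reflexivity.
  pose proof (valid_copy_label i) as Hl. destruct (copy_label i) as [[v j]|]; simpl.
  - change (inner (S (depv v)) (helmert_vec v j) (real_shift a) = 0).
    rewrite inner_comm. apply inner_real_shift_helmert_vec; auto.
  - unfold rsum. simpl. unfold real_shift. rewrite (parent_root E root HT). ring.
Qed.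

Lemma kernel_apply_real_shift_succ i k a :
  kernel_apply Lev copy_height copy_kernel (real_shift a) (i, S k)
  = kernel_apply Lev copy_height copy_kernel a (i, k).
Proof.
  unfold kernel_apply, copy_kernel, copy_height. simpl. rewrite Nat.add_succ_r, basis_succ by lia.
  apply inner_real_shift.
Qed.

Theorem isometric_shift_equivalence :
  unitarily_equivalent (weighted_shift E lam) (direct_sum m (classical_dirichlet 1)).
Proof.
  exists (level_op Lev copy_height copy_kernel). split.
  - apply (level_op_unitary depv Lev copy_height copy_level);
      auto using level_enum_dep, level_enum_copy_level, copy_kernel_columns, copy_kernel_rows.
  - intros f _ [i [|k]]; unfold level_op, direct_sum, classical_dirichlet; cbn [fst snd];
      replace (fun x => fst (weighted_shift E lam f x)) with (real_shift (fun v => fst (f v)))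
        by (apply functional_extensionality; intros x; rewrite weighted_shift_pair; reflexivity);
      replace (fun x => snd (weighted_shift E lam f x)) with (real_shift (fun v => snd (f v)))
        by (apply functional_extensionality; intros x; rewrite weighted_shift_pair; reflexivity).
    + rewrite !kernel_apply_real_shift_bottom. reflexivity.
    + rewrite !kernel_apply_real_shift_succ.
      replace ((INR k + 1) / (INR k + 1)) with 1 by (pose proof (pos_INR k); field; lra).
      rewrite sqrt_1, Cmul_RtoC. apply C_ext; cbn [fst snd]; ring.
Qed.

End Copies.

End IsometricShift.

Theorem mainTheorem6 (V : Type) (E : V -> V -> Prop) (root : V) (q : R) (lam : V -> R)
  (HT : rooted_directed_tree E root) (Hlf : locally_finite E) (Hleaf : leafless E)
  (Hcount : countably_infinite V) (Hfbi : finite_branching_index E root)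
  (Hq : 1 <= q) (Hlam : dirichlet_weights E root q lam) :
  (exists m : nat, (1 <= m)%nat /\
     unitarily_equivalent (weighted_shift E lam) (direct_sum m (classical_dirichlet q)))
  <-> (q = 1 \/ iso_to_nat E).
Proof.
  split.
  - intros Heq. destruct (Req_dec q 1) as [->|Hq1]; [left; reflexivity | right].
    apply (iso_to_nat_of_equivalence E root HT Hlf Hleaf q lam); auto. lra.
  - intros [->|[phi [Hinj [Hsurj Hedge]]]].
    + destruct (valid_labels_finite E root HT Hlf Hfbi) as [G [HG HGv]].
      exists (length G). split.
      * destruct G; [destruct (proj2 (HGv None) I) | simpl; lia].
      * exact (isometric_shift_equivalence E root HT Hlf Hleaf lam Hlam G HG HGv).
    + exists 1%nat. split; [lia|]. apply (equivalence_of_path E root HT Hlf Hleaf q lam Hlam phi); auto.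
Qed.
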